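(* Let $\mathcal C\subset\mathbb R^3$ be a non-planar real analytic curve with arc-length parameterization $\gamma:[0,L]\to\mathbb R^3$ and nowhere zero curvature, which has exactly one point $t_0\in[0,L]$ with zero torsion, of order $m\ge1$, i.e. $\tau(t_0)=\dots=\tau^{(m-1)}(t_0)=0$ and $\tau^{(m)}(t_0)\ne0$. For a unit vector $\xi\in S^2$ let $\phi_\xi(t)=\langle\xi,\gamma(t)\rangle$, and for a smooth amplitude $A\in C^\infty[0,L]$ and $\lambda>0$ let $$I(\lambda,\xi)=\int_0^L A(t)e^{i\lambda\phi_\xi(t)}\,dt.$$ Then $$I(\lambda,\xi)\ll_{\mathcal C}\frac{1}{\lambda^{1/(m+3)}}\left(\|A\|_\infty+\|A'\|_1\right),$$ with the implied constant depending only on $\mathcal C$ (uniform in $\xi$).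
   Context: The curvature is $\kappa(t)=\|\gamma''(t)\|$; with $T=\gamma'$, $N=\gamma''/\kappa$ and $B=T\times N$, the torsion $\tau$ is defined by $B'(t)=-\tau(t)N(t)$. *)

From Stdlib Require Import Reals Lra.
From Coquelicot Require Import Coquelicot.
Open Scope R_scope.

Definition v3 : Type := (R * R * R)%type.
Definition vx (v : v3) : R := fst (fst v).
Definition vy (v : v3) : R := snd (fst v).
Definition vz (v : v3) : R := snd v.
Definition mkv3 (x y z : R) : v3 := (x, y, z).

Definition dot3 (u v : v3) : R := vx u * vx v + vy u * vy v + vz u * vz v.
Definition norm3 (u : v3) : R := sqrt (dot3 u u).
Definition scal3 (a : R) (u : v3) : v3 := mkv3 (a * vx u) (a * vy u) (a * vz u).
Definition cross3 (u v : v3) : v3 :=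
  mkv3 (vy u * vz v - vz u * vy v)
       (vz u * vx v - vx u * vz v)
       (vx u * vy v - vy u * vx v).

Definition D3 (g : R -> v3) (t : R) : v3 :=
  mkv3 (Derive (fun s => vx (g s)) t)
       (Derive (fun s => vy (g s)) t)
       (Derive (fun s => vz (g s)) t).

Definition analytic_at (f : R -> R) (x : R) : Prop :=
  exists (a : nat -> R) (r : R), 0 < r /\
    forall y, Rabs (y - x) < r -> is_pseries a (y - x) (f y).

Definition curve_analytic_at (g : R -> v3) (x : R) : Prop :=
  analytic_at (fun s => vx (g s)) x /\
  analytic_at (fun s => vy (g s)) x /\
  analytic_at (fun s => vz (g s)) x.

(** Frenet frame of an arc-length parametrised curve (context):
    kappa = |gamma''|, T = gamma', N = gamma''/kappa, B = T x N,
    and the torsion tau is the coefficient in B' = - tau N, i.e.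
    tau = - <B', N> (N is a unit vector). *)
Definition tangent (g : R -> v3) (t : R) : v3 := D3 g t.
Definition curvature (g : R -> v3) (t : R) : R := norm3 (D3 (D3 g) t).
Definition normal (g : R -> v3) (t : R) : v3 :=
  scal3 (/ curvature g t) (D3 (D3 g) t).
Definition binormal (g : R -> v3) (t : R) : v3 :=
  cross3 (tangent g t) (normal g t).
Definition torsion (g : R -> v3) (t : R) : R :=
  - dot3 (D3 (binormal g) t) (normal g t).

Definition non_planar (g : R -> v3) (L : R) : Prop :=
  ~ (exists (n : v3) (c : R), n <> mkv3 0 0 0 /\
       forall t, 0 <= t <= L -> dot3 n (g t) = c).

Definition phase (g : R -> v3) (xi : v3) (t : R) : R := dot3 xi (g t).

(** |I(lambda, xi)| where
    I = int_0^L A(t) e^{i lambda phi_xi(t)} dt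
      = int_0^L A cos(lambda phi) + i int_0^L A sin(lambda phi). *)
Definition osc_integral_abs (g : R -> v3) (L : R) (A : R -> R)
    (lam : R) (xi : v3) : R :=
  let re := RInt (fun t => A t * cos (lam * phase g xi t)) 0 L in
  let im := RInt (fun t => A t * sin (lam * phase g xi t)) 0 L in
  sqrt (re ^ 2 + im ^ 2).

Definition smooth (A : R -> R) : Prop :=
  forall (n : nat) (t : R), ex_derive (Derive_n A n) t.

Definition sup_norm (A : R -> R) (a b : R) : R :=
  real (Lub_Rbar (fun y => exists t, a <= t <= b /\ y = Rabs (A t))).

Definition L1_norm_deriv (A : R -> R) (a b : R) : R :=
  RInt (fun t => Rabs (Derive A t)) a b.

From Stdlib Require Import Reals Lra Lia.
From Coquelicot Require Import Coquelicot.
Open Scope R_scope.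

(* For a unit vector [xi] the phase [phi = <xi, gamma>] has [phi^(k) = <xi, gamma^(k)>].
   The sum over [k <= m] of [det (gamma', gamma'', gamma^(k+3))^2] is positive on [[0, L]]:
   away from [t0] its first term is [(|gamma''|^2 tau)^2], and at [t0] the vanishing of all
   these determinants would make [tau] vanish to order [m]. By compactness, on each piece of
   a fixed partition of [[0, L]] some [|phi^(k)|], [1 <= k <= m + 3], stays above a constant
   independent of [xi], and van der Corput's lemma bounds the integral over the piece by
   [C lam^(-1/(m+3))]. Integration by parts brings in the amplitude, and the imaginary part
   is the real part for the phase shifted by [- pi / (2 lam)]. *)

Ltac neq0 := let Hc := fresh in intro Hc;
  repeat match type of Hc with
  | _ * _ = 0 => apply Rmult_integral in Hc; destruct Hc as [Hc|Hc]
  end; try lra.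

Lemma ex_derive_continuous_R (f : R -> R) x : ex_derive f x -> continuous f x.
Proof. apply (@ex_derive_continuous R_AbsRing R_NormedModule). Qed.

Lemma continuous_mult_R (f g : R -> R) x :
  continuous f x -> continuous g x -> continuous (fun y => f y * g y) x.
Proof. intros; apply (@continuous_mult R_UniformSpace R_AbsRing f g x); auto. Qed.

Lemma continuous_plus_R (f g : R -> R) x :
  continuous f x -> continuous g x -> continuous (fun y => f y + g y) x.
Proof. intros; apply (@continuous_plus R_UniformSpace R_AbsRing R_NormedModule f g x); auto. Qed.

Lemma continuity_pt_of_continuous (f : R -> R) x : continuous f x -> continuity_pt f x.
Proof. intros; apply continuity_pt_filterlim; auto. Qed.

Lemma ex_RInt_continuous_on (f : R -> R) a b :
  a <= b -> (forall x, a <= x <= b -> continuous f x) -> ex_RInt f a b.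
Proof.
  intros Hab H. apply (@ex_RInt_continuous R_CompleteNormedModule).
  rewrite Rmin_left, Rmax_right by lra. exact H.
Qed.

Lemma abs_RInt_le_RInt (f g : R -> R) a b :
  a <= b -> ex_RInt f a b -> ex_RInt g a b -> ex_RInt (fun x => Rabs (f x)) a b ->
  (forall x, a <= x <= b -> Rabs (f x) <= g x) ->
  Rabs (RInt f a b) <= RInt g a b.
Proof.
  intros Hab Hf Hg Ha H. eapply Rle_trans; [apply abs_RInt_le; auto|].
  apply RInt_le; auto. intros; apply H; lra.
Qed.

Lemma RInt_mult_const_r (f : R -> R) a b M :
  ex_RInt f a b -> RInt (fun t => f t * M) a b = RInt f a b * M.
Proof.
  intros H. pose proof (@RInt_scal R_CompleteNormedModule f a b M H) as E.
  unfold scal in E; simpl in E; unfold mult in E; simpl in E.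
  rewrite Rmult_comm, <- E. apply RInt_ext. intros; apply Rmult_comm.
Qed.

Lemma Derive_n_plus_const (phi : R -> R) c n t :
  Derive_n (fun x => phi x + c) (S n) t = Derive_n phi (S n) t.
Proof.
  revert t; induction n; intros t.
  - simpl. unfold Derive. apply f_equal. apply Lim_ext. intros y. f_equal. ring.
  - simpl. apply Derive_ext. intros; apply IHn.
Qed.

Definition smooth_on (phi : R -> R) (a b : R) : Prop :=
  forall n t, a <= t <= b -> ex_derive (Derive_n phi n) t.

Lemma smooth_on_continuous phi a b n t :
  smooth_on phi a b -> a <= t <= b -> continuous (Derive_n phi n) t.
Proof. intros H Ht. apply ex_derive_continuous_R, H; auto. Qed.

Lemma smooth_on_subinterval phi a b a' b' :
  smooth_on phi a b -> a <= a' -> b' <= b -> smooth_on phi a' b'.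
Proof. intros H ? ? n t Ht; apply H; lra. Qed.

Lemma smooth_on_opp phi a b : smooth_on phi a b -> smooth_on (fun t => - phi t) a b.
Proof.
  intros H n t Ht. apply ex_derive_ext with (f := fun t => - Derive_n phi n t).
  - intros; rewrite Derive_n_opp; auto.
  - apply (@ex_derive_opp R_AbsRing R_NormedModule (Derive_n phi n)), H; auto.
Qed.

Lemma smooth_on_plus_const phi c a b : smooth_on phi a b -> smooth_on (fun x => phi x + c) a b.
Proof.
  intros H n t Ht. destruct n.
  - apply (@ex_derive_plus R_AbsRing R_NormedModule phi (fun _ => c)).
    + apply (H 0%nat); auto.
    + apply ex_derive_const.
  - apply ex_derive_ext with (f := Derive_n phi (S n)).
    + intros; rewrite Derive_n_plus_const; auto.
    + apply H; auto.
Qed.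

Lemma smooth_on_MVT phi n a b x y : smooth_on phi a b -> a <= x -> x <= y -> y <= b ->
  exists c, x <= c <= y /\
    Derive_n phi n y - Derive_n phi n x = Derive_n phi (S n) c * (y - x).
Proof.
  intros HR H1 H2 H3.
  destruct (MVT_gen (Derive_n phi n) x y (Derive_n phi (S n))) as [c [Hc E]].
  - intros z Hz. rewrite Rmin_left, Rmax_right in Hz by lra.
    apply Derive_correct, HR. lra.
  - intros z Hz. rewrite Rmin_left, Rmax_right in Hz by lra.
    apply continuity_pt_of_continuous, smooth_on_continuous with a b; auto; lra.
  - rewrite Rmin_left, Rmax_right in Hc by lra. exists c; split; auto.
Qed.

Lemma smooth_on_increment_ge phi n a b mu x y : smooth_on phi a b ->
  (forall t, a <= t <= b -> mu <= Derive_n phi (S n) t) -> a <= x -> x <= y -> y <= b ->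
  mu * (y - x) <= Derive_n phi n y - Derive_n phi n x.
Proof.
  intros HR Hm H1 H2 H3. destruct (smooth_on_MVT phi n a b x y) as [c [Hc ->]]; auto.
  apply Rmult_le_compat_r; [lra|]. apply Hm; lra.
Qed.

Lemma smooth_on_increment_abs_le phi n a b K x y : smooth_on phi a b ->
  (forall t, a <= t <= b -> Rabs (Derive_n phi (S n) t) <= K) -> a <= x -> x <= y -> y <= b ->
  Rabs (Derive_n phi n y - Derive_n phi n x) <= K * (y - x).
Proof.
  intros HR Hm H1 H2 H3. destruct (smooth_on_MVT phi n a b x y) as [c [Hc ->]]; auto.
  rewrite Rabs_mult, (Rabs_pos_eq (y - x)) by lra.
  apply Rmult_le_compat_r; [lra|]. apply Hm; lra.
Qed.

(** * Van der Corput estimates for [int cos (lam phi)] *)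

Definition cos_integral (phi : R -> R) (lam a b : R) : R :=
  RInt (fun t => cos (lam * phi t)) a b.

Lemma cos_integral_opp phi lam a b :
  cos_integral (fun t => - phi t) lam a b = cos_integral phi lam a b.
Proof. apply RInt_ext. intros. rewrite <- cos_neg. f_equal. ring. Qed.

Lemma cos_integral_point phi lam a : cos_integral phi lam a a = 0.
Proof. unfold cos_integral. rewrite RInt_point. reflexivity. Qed.

Lemma ex_RInt_cos_phase phi lam a b :
  a <= b -> smooth_on phi a b -> ex_RInt (fun t => cos (lam * phi t)) a b.
Proof.
  intros Hab HR. apply ex_RInt_continuous_on; auto. intros x Hx. apply ex_derive_continuous_R.
  assert (ex_derive phi x) by (apply (HR 0%nat); auto). auto_derive. auto.
Qed.

Lemma cos_integral_Chasles phi lam a b c : a <= b -> b <= c -> smooth_on phi a c ->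
  cos_integral phi lam a c = cos_integral phi lam a b + cos_integral phi lam b c.
Proof.
  intros H1 H2 HR. unfold cos_integral. symmetry.
  apply (@RInt_Chasles R_CompleteNormedModule); apply ex_RInt_cos_phase; auto;
    eapply smooth_on_subinterval; eauto; lra.
Qed.

Lemma cos_integral_abs_le_length phi lam a b :
  a <= b -> smooth_on phi a b -> Rabs (cos_integral phi lam a b) <= b - a.
Proof.
  intros Hab HR. rewrite <- (Rmult_1_r (b - a)). apply abs_RInt_le_const; auto.
  - apply ex_RInt_cos_phase; auto.
  - intros; apply Rabs_le, COS_bound.
Qed.

Section FirstDerivative.

Variables (phi : R -> R) (a b mu lam : R).
Hypotheses (Hab : a <= b) (Hphi : smooth_on phi a b) (Hmu : 0 < mu) (Hlam : 0 < lam)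
  (Hmono : forall t, a <= t <= b -> mu <= Derive phi t).

Let Hd0 t : a <= t <= b -> ex_derive phi t := Hphi 0%nat t.
Let Hd1 t : a <= t <= b -> ex_derive (Derive phi) t := Hphi 1%nat t.
Let Hd2 t : a <= t <= b -> ex_derive (Derive (Derive phi)) t := Hphi 2%nat t.

Lemma Derive_phase_pos t : a <= t <= b -> 0 < Derive phi t.
Proof. intros Ht. specialize (Hmono t Ht). lra. Qed.

Lemma continuous_phase_ratio t : a <= t <= b ->
  continuous (fun x => Rabs (Derive (Derive phi) x) / (lam * Derive phi x ^ 2)) t.
Proof.
  intros Ht. pose proof (Hd0 t Ht). pose proof (Hd1 t Ht). pose proof (Hd2 t Ht).
  pose proof (Derive_phase_pos t Ht).
  unfold Rdiv. apply continuous_mult_R.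
  - apply continuous_Rabs_comp, ex_derive_continuous_R; auto.
  - apply ex_derive_continuous_R. auto_derive. repeat split; auto; neq0.
Qed.

Lemma Rabs_sin_phase_div_le t : a <= t <= b ->
  Rabs (sin (lam * phi t) / (lam * Derive phi t)) <= 1 / (lam * mu).
Proof.
  intros Ht. pose proof (Hmono t Ht). pose proof (SIN_bound (lam * phi t)).
  rewrite Rabs_div by (apply Rmult_integral_contrapositive; split; lra).
  rewrite (Rabs_pos_eq (lam * _)) by nra. unfold Rdiv.
  apply Rmult_le_compat; try apply Rabs_pos.
  - left; apply Rinv_0_lt_compat; nra.
  - apply Rabs_le. lra.
  - apply Rinv_le_contravar; nra.
Qed.

Lemma Rabs_sin_phase_ratio_le t : a <= t <= b ->
  Rabs (sin (lam * phi t) * Derive (Derive phi) t / (lam * Derive phi t ^ 2)) <=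
  Rabs (Derive (Derive phi) t) / (lam * Derive phi t ^ 2).
Proof.
  intros Ht. pose proof (Derive_phase_pos t Ht).
  assert (0 < lam * Derive phi t ^ 2) by (apply Rmult_lt_0_compat; auto; apply pow_lt; lra).
  rewrite Rabs_div, (Rabs_pos_eq (lam * _)) by lra.
  apply Rmult_le_compat_r; [left; apply Rinv_0_lt_compat; auto|].
  rewrite Rabs_mult. pose proof (Rabs_pos (Derive (Derive phi) t)).
  assert (Rabs (sin (lam * phi t)) <= 1) by (apply Rabs_le, SIN_bound).
  nra.
Qed.

(* Integration by parts against [d/dt (sin (lam phi) / (lam phi'))]. *)
Lemma cos_integral_first_derivative :
  Rabs (cos_integral phi lam a b) <=
  2 / (lam * mu) + RInt (fun t => Rabs (Derive (Derive phi) t) / (lam * Derive phi t ^ 2)) a b.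
Proof.
  set (H := fun x => sin (lam * phi x) / (lam * Derive phi x)).
  set (r := fun x => sin (lam * phi x) * Derive (Derive phi) x / (lam * Derive phi x ^ 2)).
  set (dH := fun x => cos (lam * phi x) - r x).
  assert (Hcont : forall f : R -> R, (forall x, a <= x <= b -> ex_derive f x) ->
            forall x, a <= x <= b -> continuous f x)
    by (intros f Hf x Hx; apply ex_derive_continuous_R, Hf, Hx).
  assert (HdH : forall x, a <= x <= b -> is_derive H x (dH x)).
  { intros x Hx. pose proof (Hd0 x Hx). pose proof (Hd1 x Hx). pose proof (Derive_phase_pos x Hx).
    unfold H, dH, r. auto_derive.
    - repeat split; auto; neq0.
    - change (fun x => phi x) with phi. change (fun x => Derive phi x) with (Derive phi).
      field. split; lra. }
  assert (Cr : forall x, a <= x <= b -> continuous r x).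
  { apply Hcont. intros x Hx. pose proof (Hd0 x Hx). pose proof (Hd1 x Hx). pose proof (Hd2 x Hx).
    pose proof (Derive_phase_pos x Hx). unfold r. auto_derive. repeat split; auto; neq0. }
  assert (CdH : forall x, a <= x <= b -> continuous dH x).
  { apply Hcont. intros x Hx. pose proof (Hd0 x Hx). pose proof (Hd1 x Hx). pose proof (Hd2 x Hx).
    pose proof (Derive_phase_pos x Hx). unfold dH, r. auto_derive. repeat split; auto; neq0. }
  assert (IdH : RInt dH a b = H b - H a).
  { apply is_RInt_unique, (is_RInt_derive H dH); rewrite Rmin_left, Rmax_right by lra; auto. }
  assert (Ecos : cos_integral phi lam a b = RInt dH a b + RInt r a b).
  { rewrite <- (RInt_plus dH r) by (apply ex_RInt_continuous_on; auto).
    apply RInt_ext. intros. unfold dH. simpl. unfold plus; simpl. ring. }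
  assert (Br : Rabs (RInt r a b) <=
     RInt (fun t => Rabs (Derive (Derive phi) t) / (lam * Derive phi t ^ 2)) a b).
  { apply abs_RInt_le_RInt; auto; try (apply ex_RInt_continuous_on; auto).
    - apply continuous_phase_ratio.
    - intros x Hx. apply continuous_Rabs_comp; auto.
    - apply Rabs_sin_phase_ratio_le. }
  rewrite Ecos, IdH.
  pose proof (Rabs_sin_phase_div_le a (conj (Rle_refl a) Hab)).
  pose proof (Rabs_sin_phase_div_le b (conj Hab (Rle_refl b))).
  pose proof (Rabs_triang (H b - H a) (RInt r a b)).
  pose proof (Rabs_triang (H b) (- H a)). rewrite Rabs_Ropp in *.
  unfold H, Rminus in *. lra.
Qed.

(* With [phi''] of constant sign the remainder integrates to [|1/phi'(b) - 1/phi'(a)| / lam]. *)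
Lemma van_der_corput_first_monotone :
  ((forall t, a <= t <= b -> 0 <= Derive (Derive phi) t) \/
   (forall t, a <= t <= b -> Derive (Derive phi) t <= 0)) ->
  Rabs (cos_integral phi lam a b) <= 3 / (lam * mu).
Proof.
  intros Hs. eapply Rle_trans; [apply cos_integral_first_derivative|].
  set (F := fun t => 1 / (lam * Derive phi t)).
  assert (Hbnd : forall t, a <= t <= b -> 0 < F t <= 1 / (lam * mu)).
  { intros t Ht. pose proof (Derive_phase_pos t Ht). pose proof (Hmono t Ht). unfold F, Rdiv.
    rewrite !Rmult_1_l. split; [apply Rinv_0_lt_compat; nra|].
    apply Rinv_le_contravar; [nra|]. apply Rmult_le_compat_l; lra. }
  assert (HF : forall t, a <= t <= b ->
            is_derive F t (- (Derive (Derive phi) t / (lam * Derive phi t ^ 2)))).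
  { intros t Ht. pose proof (Derive_phase_pos t Ht). pose proof (Hd1 t Ht). unfold F.
    auto_derive; [repeat split; auto; neq0|].
    change (fun x => Derive phi x) with (Derive phi). field. lra. }
  assert (CF : forall t, a <= t <= b ->
            continuous (fun t => Derive (Derive phi) t / (lam * Derive phi t ^ 2)) t).
  { intros t Ht. pose proof (Derive_phase_pos t Ht). pose proof (Hd1 t Ht). pose proof (Hd2 t Ht).
    apply ex_derive_continuous_R. auto_derive. repeat split; auto; neq0. }
  pose proof (Hbnd a (conj (Rle_refl a) Hab)). pose proof (Hbnd b (conj Hab (Rle_refl b))).
  destruct Hs as [Hs|Hs].
  - rewrite (@is_RInt_unique R_CompleteNormedModule _ a b (- F b - - F a)); [lra|].
    apply (is_RInt_ext (fun t => Derive (Derive phi) t / (lam * Derive phi t ^ 2))).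
    { rewrite Rmin_left, Rmax_right by lra. intros x Hx.
      rewrite Rabs_pos_eq; auto. apply Hs; lra. }
    apply (is_RInt_derive (fun t => - F t)); rewrite Rmin_left, Rmax_right by lra; intros x Hx.
    + rewrite <- (Ropp_involutive (_ / _)).
      apply (@is_derive_opp R_AbsRing R_NormedModule), HF, Hx.
    + apply CF, Hx.
  - rewrite (@is_RInt_unique R_CompleteNormedModule _ a b (F b - F a)); [lra|].
    apply (is_RInt_ext (fun t => - (Derive (Derive phi) t / (lam * Derive phi t ^ 2)))).
    { rewrite Rmin_left, Rmax_right by lra. intros x Hx.
      rewrite Rabs_left1 by (apply Hs; lra). exact (eq_sym (Rdiv_opp_l _ _)). }
    apply (is_RInt_derive F); rewrite Rmin_left, Rmax_right by lra; intros x Hx.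
    + apply HF, Hx.
    + apply (@continuous_opp R_UniformSpace R_AbsRing R_NormedModule), CF, Hx.
Qed.

Lemma van_der_corput_first_bounded K :
  (forall t, a <= t <= b -> Rabs (Derive (Derive phi) t) <= K) ->
  Rabs (cos_integral phi lam a b) <= 2 / (lam * mu) + (b - a) * K / (lam * mu ^ 2).
Proof.
  intros HK. eapply Rle_trans; [apply cos_integral_first_derivative|].
  apply Rplus_le_compat_l.
  replace ((b - a) * K / (lam * mu ^ 2)) with (RInt (fun _ => K / (lam * mu ^ 2)) a b).
  2: { rewrite RInt_const. simpl. unfold scal; simpl; unfold mult; simpl. field. lra. }
  apply RInt_le; auto.
  - apply ex_RInt_continuous_on; auto. apply continuous_phase_ratio.
  - apply ex_RInt_const.
  - intros x Hx. assert (Hx' : a <= x <= b) by lra.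
    pose proof (Derive_phase_pos x Hx'). pose proof (Hmono x Hx'). pose proof (HK x Hx').
    assert (0 < lam * mu ^ 2) by (apply Rmult_lt_0_compat; auto; apply pow_lt; auto).
    unfold Rdiv. apply Rmult_le_compat; auto.
    + apply Rabs_pos.
    + left; apply Rinv_0_lt_compat; apply Rmult_lt_0_compat; auto; apply pow_lt; auto.
    + apply Rinv_le_contravar; auto. apply Rmult_le_compat_l; [lra|]. simpl. nra.
Qed.

End FirstDerivative.

Lemma increasing_split (g : R -> R) a b mu eps :
  a <= b -> 0 < mu -> 0 < eps -> (forall t, a <= t <= b -> continuity_pt g t) ->
  (forall x y, a <= x -> x <= y -> y <= b -> mu * (y - x) <= g y - g x) ->
  exists lo hi, a <= lo <= hi /\ hi <= b /\ mu * (hi - lo) <= 2 * eps /\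
    (lo = a \/ forall t, a <= t <= lo -> g t <= - eps) /\
    (hi = b \/ forall t, hi <= t <= b -> eps <= g t).
Proof.
  intros Hab Hmu Heps Hg Hinc.
  destruct (Rle_lt_dec (g b) (- eps)) as [Hb|Hb].
  { exists b, b. do 3 (split; [lra|]). split; [right|left; reflexivity]. intros t Ht.
    pose proof (Hinc t b ltac:(lra) ltac:(lra) ltac:(lra)). nra. }
  destruct (Rle_lt_dec eps (g a)) as [Ha|Ha].
  { exists a, a. do 3 (split; [lra|]). split; [left; reflexivity|right]. intros t Ht.
    pose proof (Hinc a t ltac:(lra) ltac:(lra) ltac:(lra)). nra. }
  assert (Hlo : exists lo, a <= lo <= b /\ - eps <= g lo /\ (lo = a \/ g lo = - eps)).
  { destruct (Rle_lt_dec (- eps) (g a)) as [H|H]; [exists a; repeat split; auto; lra|].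
    assert (a < b) by (destruct (Req_dec a b) as [->|]; lra).
    destruct (Ranalysis5.IVT_interv (fun t => g t + eps) a b) as [z [Hz Ez]]; try lra.
    - intros t Ht. apply continuity_pt_plus; auto. apply continuity_pt_const. intros ??; auto.
    - exists z. repeat split; lra. }
  assert (Hhi : exists hi, a <= hi <= b /\ g hi <= eps /\ (hi = b \/ g hi = eps)).
  { destruct (Rle_lt_dec (g b) eps) as [H|H]; [exists b; repeat split; auto; lra|].
    assert (a < b) by (destruct (Req_dec a b) as [->|]; lra).
    destruct (Ranalysis5.IVT_interv (fun t => g t - eps) a b) as [z [Hz Ez]]; try lra.
    - intros t Ht. apply continuity_pt_minus; auto. apply continuity_pt_const. intros ??; auto.
    - exists z. repeat split; lra. }
  destruct Hlo as [lo [Hl1 [Hl2 Hl3]]], Hhi as [hi [Hh1 [Hh2 Hh3]]].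
  assert (Hlh : lo <= hi).
  { destruct (Rle_lt_dec lo hi) as [H|H]; auto.
    pose proof (Hinc hi lo ltac:(lra) ltac:(lra) ltac:(lra)).
    destruct Hl3 as [->|Hl3]; [lra|]. destruct Hh3 as [->|Hh3]; [lra|]. nra. }
  exists lo, hi. repeat split; try lra.
  - pose proof (Hinc lo hi ltac:(lra) ltac:(lra) ltac:(lra)). lra.
  - destruct Hl3 as [->|Hl3]; [left; auto|right]. intros t Ht.
    pose proof (Hinc t lo ltac:(lra) ltac:(lra) ltac:(lra)). nra.
  - destruct Hh3 as [->|Hh3]; [left; auto|right]. intros t Ht.
    pose proof (Hinc hi t ltac:(lra) ltac:(lra) ltac:(lra)). nra.
Qed.

(* For [k = 0] the first-derivative case needs [phi'] to be monotone. *)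
Definition vdc_estimate_pos (k : nat) : Prop :=
  forall phi a b mu lam s, a <= b -> smooth_on phi a b -> 0 < mu -> 0 < lam -> 0 < s ->
  1 <= lam * mu * s ^ (S k) ->
  (forall t, a <= t <= b -> mu <= Derive_n phi (S k) t) ->
  (k = 0%nat -> (forall t, a <= t <= b -> 0 <= Derive_n phi 2 t) \/
                (forall t, a <= t <= b -> Derive_n phi 2 t <= 0)) ->
  Rabs (cos_integral phi lam a b) <= 4 ^ (S k) * s.

Definition vdc_estimate (k : nat) : Prop :=
  forall phi a b mu lam s, a <= b -> smooth_on phi a b -> 0 < mu -> 0 < lam -> 0 < s ->
  1 <= lam * mu * s ^ (S k) ->
  ((forall t, a <= t <= b -> mu <= Derive_n phi (S k) t) \/
   (forall t, a <= t <= b -> Derive_n phi (S k) t <= - mu)) ->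
  (k = 0%nat -> (forall t, a <= t <= b -> 0 <= Derive_n phi 2 t) \/
                (forall t, a <= t <= b -> Derive_n phi 2 t <= 0)) ->
  Rabs (cos_integral phi lam a b) <= 4 ^ (S k) * s.

Lemma vdc_estimate_of_pos k : vdc_estimate_pos k -> vdc_estimate k.
Proof.
  intros HP phi a b mu lam s Hab HR Hmu Hlam Hs Hk [Hd|Hd] Hsg; [apply (HP phi a b mu lam s); auto|].
  rewrite <- cos_integral_opp. apply (HP (fun t => - phi t) a b mu lam s); auto.
  - apply smooth_on_opp; auto.
  - intros t Ht. rewrite Derive_n_opp. specialize (Hd t Ht); lra.
  - intros Hj. destruct (Hsg Hj) as [H|H]; [right|left]; intros t Ht;
      rewrite Derive_n_opp; specialize (H t Ht); lra.
Qed.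

Lemma vdc_estimate_pos_0 : vdc_estimate_pos 0.
Proof.
  intros phi a b mu lam s Hab HR Hmu Hlam Hs Hk Hd Hsg.
  eapply Rle_trans; [apply (van_der_corput_first_monotone phi a b mu lam); auto|].
  simpl in Hk |- *. rewrite Rmult_1_r in Hk.
  assert (1 / (lam * mu) <= s).
  { unfold Rdiv. rewrite Rmult_1_l. apply (Rmult_le_reg_l (lam * mu)); [nra|].
    rewrite Rinv_r by nra. lra. }
  lra.
Qed.

(* Split where [|phi^(k+2)| < mu s]: outside, the induction hypothesis applies with
   [mu s] in place of [mu]; inside, an interval of length [<= 2 s] is bounded trivially. *)
Lemma vdc_estimate_pos_S k : vdc_estimate k -> vdc_estimate_pos (S k).
Proof.
  intros IH phi a b mu lam s Hab HR Hmu Hlam Hs Hk Hd _.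
  set (eps := mu * s).
  assert (Heps : 0 < eps) by (unfold eps; nra).
  assert (P4 : 1 <= 4 ^ (S k)) by (apply pow_R1_Rle; lra).
  assert (IH' : forall a' b', a <= a' -> a' <= b' -> b' <= b ->
     (forall t, a' <= t <= b' -> Derive_n phi (S k) t <= - eps) \/
     (forall t, a' <= t <= b' -> eps <= Derive_n phi (S k) t) ->
     Rabs (cos_integral phi lam a' b') <= 4 ^ (S k) * s).
  { intros a' b' H1 H2 H3 Hg. apply (IH phi a' b' eps lam s); auto.
    - eapply smooth_on_subinterval; eauto.
    - unfold eps. replace (lam * (mu * s) * s ^ S k) with (lam * mu * s ^ S (S k)) by (simpl; ring). auto.
    - destruct Hg as [Hg|Hg]; [right|left]; auto.
    - intros ->. left. intros t Ht. specialize (Hd t ltac:(lra)). simpl in Hd |- *. lra. }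
  destruct (increasing_split (Derive_n phi (S k)) a b mu eps) as
      [lo [hi [Hlo [Hhi [Hlen [Hleft Hright]]]]]]; auto.
  { intros t Ht. apply continuity_pt_of_continuous, smooth_on_continuous with a b; auto. }
  { intros x y H1 H2 H3. apply (smooth_on_increment_ge phi (S k) a b mu x y); auto. }
  rewrite (cos_integral_Chasles phi lam a lo b) by (auto; lra).
  rewrite (cos_integral_Chasles phi lam lo hi b) by (try lra; eapply smooth_on_subinterval; eauto; lra).
  assert (I1 : Rabs (cos_integral phi lam a lo) <= 4 ^ (S k) * s).
  { destruct Hleft as [->|Hleft]; [rewrite cos_integral_point, Rabs_R0; nra|].
    apply IH'; auto; lra. }
  assert (I3 : Rabs (cos_integral phi lam hi b) <= 4 ^ (S k) * s).
  { destruct Hright as [->|Hright]; [rewrite cos_integral_point, Rabs_R0; nra|].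
    apply IH'; auto; lra. }
  assert (I2 : Rabs (cos_integral phi lam lo hi) <= 2 * s).
  { eapply Rle_trans; [apply cos_integral_abs_le_length; [lra|];
      eapply smooth_on_subinterval; eauto; lra|].
    unfold eps in Hlen. nra. }
  pose proof (Rabs_triang (cos_integral phi lam a lo)
                (cos_integral phi lam lo hi + cos_integral phi lam hi b)).
  pose proof (Rabs_triang (cos_integral phi lam lo hi) (cos_integral phi lam hi b)).
  replace (4 ^ S (S k)) with (4 * 4 ^ S k) by (simpl; ring). nra.
Qed.

Lemma van_der_corput k : vdc_estimate k.
Proof.
  apply vdc_estimate_of_pos. induction k.
  - apply vdc_estimate_pos_0.
  - apply vdc_estimate_pos_S, vdc_estimate_of_pos, IHk.
Qed.

Lemma Rpower_gt_0 lam y : 0 < Rpower lam y.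
Proof. apply exp_pos. Qed.

Lemma Rpower_neg_inv_ge_1 lam K : 0 < lam < 1 -> (1 <= K)%nat -> 1 <= Rpower lam (- / INR K).
Proof.
  intros Hl HK. unfold Rpower. rewrite <- exp_0. left; apply exp_increasing.
  assert (ln lam < 0) by (rewrite <- ln_1; apply ln_increasing; lra).
  assert (0 < / INR K) by (apply Rinv_0_lt_compat, lt_0_INR; lia).
  nra.
Qed.

Lemma Rinv_le_Rpower_neg_inv lam k K : 1 <= lam -> (1 <= k <= K)%nat ->
  / lam <= Rpower lam (- / INR K) ^ k.
Proof.
  intros Hl Hk. rewrite <- Rpower_pow, Rpower_mult by apply Rpower_gt_0.
  rewrite <- (Rpower_1 lam) at 1 by lra. rewrite <- Rpower_Ropp. apply Rle_Rpower; auto.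
  assert (1 <= INR k) by (replace 1 with (INR 1) by reflexivity; apply le_INR; lia).
  assert (INR k <= INR K) by (apply le_INR; lia).
  replace (- / INR K * INR k) with (- (INR k / INR K)) by (unfold Rdiv; ring).
  apply Ropp_le_contravar. apply (Rmult_le_reg_r (INR K)); [lra|].
  unfold Rdiv. rewrite Rmult_assoc, Rinv_l by lra. lra.
Qed.

Lemma vdc_scale_condition lam K k mu mu0 : 1 <= lam -> (1 <= k <= K)%nat ->
  0 < mu0 -> mu0 <= mu -> mu0 <= 1 ->
  1 <= lam * mu * (Rpower lam (- / INR K) / mu0) ^ k.
Proof.
  intros Hl Hk H0 H1 H2. set (X := Rpower lam (- / INR K)).
  assert (Xk : / lam <= X ^ k) by (apply Rinv_le_Rpower_neg_inv; auto).
  assert (Mk : mu0 ^ k <= mu0).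
  { destruct k as [|k]; [lia|]. rewrite <- tech_pow_Rmult.
    assert (mu0 ^ k <= 1) by (rewrite <- (pow1 k); apply pow_incr; lra).
    assert (0 <= mu0 ^ k) by (apply pow_le; lra). nra. }
  assert (Pk : 0 < mu0 ^ k) by (apply pow_lt; auto).
  assert (1 <= lam * X ^ k).
  { rewrite <- (Rinv_r lam) by lra. apply Rmult_le_compat_l; lra. }
  assert (1 <= mu * / mu0 ^ k).
  { rewrite <- (Rinv_r (mu0 ^ k)) by lra. apply Rmult_le_compat_r; [|lra].
    left; apply Rinv_0_lt_compat; auto. }
  unfold Rdiv. rewrite Rpow_mult_distr, pow_inv.
  replace (lam * mu * (X ^ k * / mu0 ^ k)) with ((lam * X ^ k) * (mu * / mu0 ^ k)) by ring.
  nra.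
Qed.

(** * Bounds on a partition of [[0, L]] *)

Lemma cos_integral_piece_first phi a b L mu B2 lam :
  a <= b -> b - a <= L -> smooth_on phi a b -> 0 < mu -> 0 <= B2 -> 0 < lam ->
  (forall t, a <= t <= b -> Rabs (Derive_n phi 2 t) <= B2) ->
  (forall t, a <= t <= b -> mu <= Derive phi t) \/ (forall t, a <= t <= b -> Derive phi t <= - mu) ->
  Rabs (cos_integral phi lam a b) <= (2 / mu + L * B2 / mu ^ 2) / lam.
Proof.
  intros Hab HL HR Hmu HB2 Hlam HB Hd.
  assert (E : (2 / mu + L * B2 / mu ^ 2) / lam = 2 / (lam * mu) + L * B2 / (lam * mu ^ 2))
    by (field; lra).
  assert ((b - a) * B2 / (lam * mu ^ 2) <= L * B2 / (lam * mu ^ 2)).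
  { unfold Rdiv. apply Rmult_le_compat_r; [|nra].
    left; apply Rinv_0_lt_compat, Rmult_lt_0_compat; auto; apply pow_lt; auto. }
  rewrite E. destruct Hd as [Hd|Hd].
  - eapply Rle_trans; [apply (van_der_corput_first_bounded phi a b mu lam) with (K := B2); auto|lra].
  - rewrite <- cos_integral_opp.
    eapply Rle_trans; [apply (van_der_corput_first_bounded (fun t => - phi t) a b mu lam) with (K := B2)|lra];
      auto using smooth_on_opp.
    + intros t Ht. change (mu <= Derive_n (fun t => - phi t) 1 t). rewrite Derive_n_opp.
      change (Derive_n phi 1 t) with (Derive phi t). specialize (Hd t Ht). lra.
    + intros t Ht. change (Rabs (Derive_n (fun t => - phi t) 2 t) <= B2).
      rewrite Derive_n_opp, Rabs_Ropp. apply HB; lra.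
Qed.

Lemma cos_integral_piece_higher phi a b K k mu lam :
  a <= b -> smooth_on phi a b -> (2 <= k <= K)%nat -> 0 < mu -> 1 <= lam ->
  (forall t, a <= t <= b -> mu <= Derive_n phi k t) \/
  (forall t, a <= t <= b -> Derive_n phi k t <= - mu) ->
  Rabs (cos_integral phi lam a b) <= 4 ^ K / Rmin mu 1 * Rpower lam (- / INR K).
Proof.
  intros Hab HR Hk Hmu Hlam Hd.
  set (X := Rpower lam (- / INR K)).
  assert (HX : 0 < X) by apply Rpower_gt_0.
  assert (Hmu0 : 0 < Rmin mu 1) by (apply Rmin_pos; lra).
  destruct k as [|j]; [lia|].
  eapply Rle_trans; [apply (van_der_corput j phi a b mu lam (X / Rmin mu 1)); auto; try lra|].
  - apply Rdiv_lt_0_compat; auto.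
  - apply vdc_scale_condition; auto; [lia|apply Rmin_l|apply Rmin_r].
  - intros ->; lia.
  - assert (4 ^ S j <= 4 ^ K) by (apply Rle_pow; [lra|lia]).
    assert (0 < / Rmin mu 1) by (apply Rinv_0_lt_compat; auto).
    replace (4 ^ S j * (X / Rmin mu 1)) with (4 ^ S j * / Rmin mu 1 * X) by (unfold Rdiv; ring).
    unfold Rdiv. apply Rmult_le_compat_r; [lra|]. apply Rmult_le_compat_r; lra.
Qed.

(* The first two terms bound pieces where [|phi'| >= mu], the last one pieces where a higher
   derivative is at least [mu]. *)
Definition piece_constant (mu B2 L : R) (K : nat) : R :=
  2 / mu + L * B2 / mu ^ 2 + 4 ^ K / Rmin mu 1.

Lemma piece_constant_pos mu B2 L K : 0 < mu -> 0 <= B2 -> 0 <= L -> 0 < piece_constant mu B2 L K.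
Proof.
  intros. unfold piece_constant. assert (0 < Rmin mu 1) by (apply Rmin_pos; lra).
  assert (0 < 4 ^ K / Rmin mu 1) by (apply Rdiv_lt_0_compat; auto; apply pow_lt; lra).
  assert (0 < 2 / mu) by (apply Rdiv_lt_0_compat; lra).
  assert (0 <= L * B2 / mu ^ 2)
    by (apply Rmult_le_pos; [nra|]; left; apply Rinv_0_lt_compat, pow_lt; auto).
  lra.
Qed.

Lemma cos_integral_piece_bound phi a b L K k mu B2 lam :
  a <= b -> b - a <= L -> smooth_on phi a b -> (1 <= k <= K)%nat -> 0 < mu -> 0 <= B2 -> 1 <= lam ->
  (forall t, a <= t <= b -> Rabs (Derive_n phi 2 t) <= B2) ->
  (forall t, a <= t <= b -> mu <= Derive_n phi k t) \/
  (forall t, a <= t <= b -> Derive_n phi k t <= - mu) ->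
  Rabs (cos_integral phi lam a b) <= piece_constant mu B2 L K * Rpower lam (- / INR K).
Proof.
  intros Hab HL HR Hk Hmu HB2 Hlam HB Hd.
  set (X := Rpower lam (- / INR K)).
  assert (HX : 0 < X) by apply Rpower_gt_0.
  assert (HA : 0 < 2 / mu + L * B2 / mu ^ 2).
  { assert (0 < 2 / mu) by (apply Rdiv_lt_0_compat; lra).
    assert (0 <= L * B2 / mu ^ 2) by
      (apply Rmult_le_pos; [nra|]; left; apply Rinv_0_lt_compat, pow_lt; auto).
    lra. }
  assert (HC : 0 < 4 ^ K / Rmin mu 1)
    by (apply Rdiv_lt_0_compat; [apply pow_lt; lra|apply Rmin_pos; lra]).
  unfold piece_constant. destruct (Nat.eq_dec k 1) as [->|Hk1].
  - assert (IX : / lam <= X) by (rewrite <- (pow_1 X); apply Rinv_le_Rpower_neg_inv; auto; lia).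
    eapply Rle_trans; [apply (cos_integral_piece_first phi a b L mu B2 lam); auto; lra|].
    unfold Rdiv at 3. fold X. nra.
  - eapply Rle_trans; [apply (cos_integral_piece_higher phi a b K k mu lam); auto; lia|].
    fold X. nra.
Qed.

Definition derivative_cover (phi : R -> R) (L : R) (K : nat) (mu : R) (N : nat) : Prop :=
  forall i, (i < N)%nat -> exists k, (1 <= k <= K)%nat /\
    ((forall t, INR i * (L / INR N) <= t <= INR (S i) * (L / INR N) -> mu <= Derive_n phi k t) \/
     (forall t, INR i * (L / INR N) <= t <= INR (S i) * (L / INR N) -> Derive_n phi k t <= - mu)).

Section PartitionSum.

Variables (phi : R -> R) (L : R) (K : nat) (mu B2 : R) (N : nat) (lam x : R).
Hypotheses (HL : 0 < L) (HR : smooth_on phi 0 L) (Hmu : 0 < mu) (HB2 : 0 <= B2) (HN : (1 <= N)%nat)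
  (HB : forall t, 0 <= t <= L -> Rabs (Derive_n phi 2 t) <= B2)
  (Hcov : derivative_cover phi L K mu N) (Hlam : 1 <= lam) (Hx : 0 <= x <= L).

Lemma partition_point_bounds n : (n <= N)%nat -> 0 <= INR n * (L / INR N) <= L.
Proof.
  intros Hn. assert (HNr : 0 < INR N) by (apply lt_0_INR; lia).
  assert (0 <= INR n) by apply pos_INR. assert (INR n <= INR N) by (apply le_INR; auto).
  split; [apply Rmult_le_pos; [lra|apply Rdiv_le_0_compat; lra]|].
  replace L with (INR N * (L / INR N)) at 2 by (field; lra).
  apply Rmult_le_compat_r; [apply Rdiv_le_0_compat|]; lra.
Qed.

Lemma cos_integral_partition_step n : (n < N)%nat ->
  Rabs (cos_integral phi lam (Rmin x (INR n * (L / INR N))) (Rmin x (INR (S n) * (L / INR N))))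
  <= piece_constant mu B2 L K * Rpower lam (- / INR K).
Proof.
  intros Hn. set (u := Rmin x (INR n * (L / INR N))). set (v := Rmin x (INR (S n) * (L / INR N))).
  pose proof (partition_point_bounds n ltac:(lia)). pose proof (partition_point_bounds (S n) Hn).
  assert (Hstep : INR n * (L / INR N) <= INR (S n) * (L / INR N))
    by (apply Rmult_le_compat_r; [apply Rdiv_le_0_compat; [lra|apply lt_0_INR; lia]|];
        apply le_INR; lia).
  destruct (Rle_dec x (INR n * (L / INR N))) as [Hxn|Hxn].
  - unfold u, v. rewrite (Rmin_left x (INR n * _)), (Rmin_left x (INR (S n) * _)) by lra.
    rewrite cos_integral_point, Rabs_R0.
    apply Rmult_le_pos; [left; apply piece_constant_pos; lra|left; apply Rpower_gt_0].
  - assert (Hu : u = INR n * (L / INR N)) by (unfold u; rewrite Rmin_right; lra).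
    assert (Hv : u <= v <= Rmin (INR (S n) * (L / INR N)) L).
    { unfold v. rewrite Hu, (Rmin_left _ L) by lra. split; [apply Rmin_glb|apply Rmin_r]; lra. }
    rewrite (Rmin_left _ L) in Hv by lra.
    destruct (Hcov n Hn) as [k [Hk Hsign]].
    apply (cos_integral_piece_bound phi u v L K k mu B2 lam); auto; try lra.
    + eapply smooth_on_subinterval; eauto; lra.
    + intros t Ht; apply HB; lra.
    + destruct Hsign as [Hs|Hs]; [left|right]; intros t Ht; apply Hs; lra.
Qed.

Lemma cos_integral_partition_sum n : (n <= N)%nat ->
  Rabs (cos_integral phi lam 0 (Rmin x (INR n * (L / INR N))))
  <= INR n * piece_constant mu B2 L K * Rpower lam (- / INR K).
Proof.
  induction n as [|n IHn]; intros Hn.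
  { simpl. rewrite Rmult_0_l, Rmin_right by lra. rewrite cos_integral_point, Rabs_R0. lra. }
  pose proof (partition_point_bounds n ltac:(lia)). pose proof (partition_point_bounds (S n) Hn).
  assert (Hstep : INR n * (L / INR N) <= INR (S n) * (L / INR N))
    by (apply Rmult_le_compat_r; [apply Rdiv_le_0_compat; [lra|apply lt_0_INR; lia]|];
        apply le_INR; lia).
  assert (Huv : 0 <= Rmin x (INR n * (L / INR N)) <= Rmin x (INR (S n) * (L / INR N)) /\
                Rmin x (INR (S n) * (L / INR N)) <= L).
  { unfold Rmin. destruct (Rle_dec x (INR n * _)), (Rle_dec x (INR (S n) * _)); lra. }
  rewrite (cos_integral_Chasles phi lam 0 (Rmin x (INR n * (L / INR N)))) by
    (try lra; eapply smooth_on_subinterval; eauto; lra).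
  eapply Rle_trans; [apply Rabs_triang|].
  replace (INR (S n) * piece_constant mu B2 L K * Rpower lam (- / INR K)) with
    (INR n * piece_constant mu B2 L K * Rpower lam (- / INR K) +
     piece_constant mu B2 L K * Rpower lam (- / INR K)) by (rewrite S_INR; ring).
  apply Rplus_le_compat; [apply IHn; lia|apply cos_integral_partition_step; lia].
Qed.

End PartitionSum.

Lemma cos_integral_cover_bound phi L K mu B2 N lam x :
  0 < L -> smooth_on phi 0 L -> 0 < mu -> 0 <= B2 -> (1 <= N)%nat -> (1 <= K)%nat ->
  (forall t, 0 <= t <= L -> Rabs (Derive_n phi 2 t) <= B2) ->
  derivative_cover phi L K mu N -> 0 < lam -> 0 <= x <= L ->
  Rabs (cos_integral phi lam 0 x) <= (L + INR N * piece_constant mu B2 L K) * Rpower lam (- / INR K).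
Proof.
  intros HL HR Hmu HB2 HN HK HB Hcov Hlam Hx.
  set (X := Rpower lam (- / INR K)). set (M := piece_constant mu B2 L K).
  assert (HX : 0 < X) by apply Rpower_gt_0.
  assert (HM : 0 < M) by (apply piece_constant_pos; lra).
  assert (HNM : 0 <= INR N * M * X) by (apply Rmult_le_pos; [apply Rmult_le_pos; [apply pos_INR|lra]|lra]).
  destruct (Rlt_le_dec lam 1) as [Hl|Hl].
  - assert (1 <= X) by (apply Rpower_neg_inv_ge_1; auto).
    eapply Rle_trans; [apply cos_integral_abs_le_length; [lra|]; eapply smooth_on_subinterval; eauto; lra|].
    nra.
  - pose proof (cos_integral_partition_sum phi L K mu B2 N lam x HL HR Hmu HB2 HN HB Hcov Hl Hx N
                  (le_n N)) as H.
    replace (INR N * (L / INR N)) with L in H by (field; apply not_0_INR; lia).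
    rewrite Rmin_left in H by lra. fold X M in H. nra.
Qed.

(** * Adding the amplitude *)

Lemma sup_norm_ge (A : R -> R) L t :
  smooth A -> 0 <= L -> 0 <= t <= L -> Rabs (A t) <= sup_norm A 0 L.
Proof.
  intros HA HL Ht.
  destruct (continuity_ab_maj (fun t => Rabs (A t)) 0 L HL) as [Mx [HM _]].
  { intros c Hc. apply continuity_pt_of_continuous, continuous_Rabs_comp,
      ex_derive_continuous_R, (HA 0%nat). }
  unfold sup_norm.
  destruct (Lub_Rbar_correct (fun y => exists t, 0 <= t <= L /\ y = Rabs (A t))) as [Hub Hl].
  assert (H1 : Rbar_le (Rabs (A t)) (Lub_Rbar (fun y => exists t, 0 <= t <= L /\ y = Rabs (A t))))
    by (apply Hub; exists t; auto).
  assert (H2 : Rbar_le (Lub_Rbar (fun y => exists t, 0 <= t <= L /\ y = Rabs (A t))) (Rabs (A Mx)))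
    by (apply Hl; intros y [u [Hu ->]]; simpl; apply HM; auto).
  destruct (Lub_Rbar _); simpl in *; auto; contradiction.
Qed.

Lemma continuous_cos_phase phi lam a b x :
  smooth_on phi a b -> a <= x <= b -> continuous (fun t => cos (lam * phi t)) x.
Proof.
  intros HR Hx. apply ex_derive_continuous_R.
  assert (ex_derive phi x) by (apply (HR 0%nat); auto). auto_derive; auto.
Qed.

Lemma is_derive_cos_integral phi lam a b x : smooth_on phi a b -> a < 0 <= x -> x < b ->
  is_derive (fun y => cos_integral phi lam 0 y) x (cos (lam * phi x)).
Proof.
  intros HR Hax Hxb.
  assert (XI : forall u v, a <= u <= b -> a <= v <= b -> ex_RInt (fun t => cos (lam * phi t)) u v).
  { intros u v Hu Hv. destruct (Rle_dec u v).
    - apply ex_RInt_continuous_on; auto. intros; eapply continuous_cos_phase; eauto; lra.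
    - apply ex_RInt_swap, ex_RInt_continuous_on; try lra.
      intros; eapply continuous_cos_phase; eauto; lra. }
  apply (@is_derive_RInt R_CompleteNormedModule (fun t => cos (lam * phi t))
           (fun y => cos_integral phi lam 0 y) 0 x).
  - exists (mkposreal (Rmin (x - a) (b - x)) ltac:(apply Rmin_pos; lra)).
    intros y Hy. unfold cos_integral. apply (@RInt_correct R_CompleteNormedModule), XI; try lra.
    cbn in Hy. unfold AbsRing_ball, abs, minus, plus, opp in Hy; simpl in Hy.
    apply Rabs_lt_between' in Hy.
    pose proof (Rmin_l (x - a) (b - x)). pose proof (Rmin_r (x - a) (b - x)). lra.
  - eapply continuous_cos_phase; eauto; lra.
Qed.

Lemma RInt_amplitude_by_parts phi lam L a b A :
  0 < L -> a < 0 -> L < b -> smooth_on phi a b -> smooth A ->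
  RInt (fun t => A t * cos (lam * phi t)) 0 L =
  A L * cos_integral phi lam 0 L - RInt (fun t => Derive A t * cos_integral phi lam 0 t) 0 L.
Proof.
  intros HL Ha Hb HR HA.
  set (c := fun t => cos (lam * phi t)). set (F := fun x => cos_integral phi lam 0 x).
  assert (Cc : forall x, 0 <= x <= L -> continuous c x)
    by (intros; eapply continuous_cos_phase; eauto; lra).
  assert (DF : forall x, 0 <= x <= L -> is_derive F x (c x))
    by (intros; eapply is_derive_cos_integral; eauto; lra).
  assert (CF : forall x, 0 <= x <= L -> continuous F x)
    by (intros x Hx; apply ex_derive_continuous_R; eexists; apply DF; auto).
  assert (CA : forall x, continuous A x) by (intros; apply ex_derive_continuous_R, (HA 0%nat)).
  assert (CdA : forall x, continuous (Derive A) x)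
    by (intros; apply ex_derive_continuous_R, (HA 1%nat)).
  assert (IBP : RInt (fun t => Derive A t * F t) 0 L + RInt (fun t => A t * c t) 0 L = A L * F L).
  { replace (A L * F L) with (A L * F L - A 0 * F 0)
      by (unfold F; rewrite cos_integral_point; ring).
    rewrite <- (@RInt_plus R_CompleteNormedModule)
      by (apply ex_RInt_continuous_on; try lra; intros; apply continuous_mult_R; auto).
    apply is_RInt_unique, (@is_RInt_derive R_CompleteNormedModule (fun t => A t * F t));
      rewrite Rmin_left, Rmax_right by lra; intros x Hx.
    - apply (@is_derive_mult R_AbsRing); [apply Derive_correct, (HA 0%nat)|apply DF; auto|].
      intros; apply Rmult_comm.
    - apply continuous_plus_R; apply continuous_mult_R; auto. }
  change (RInt (fun t => A t * cos (lam * phi t)) 0 L) with (RInt (fun t => A t * c t) 0 L).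
  fold F. lra.
Qed.

Lemma amplitude_bound phi lam L a b A M : 0 < L -> a < 0 -> L < b -> smooth_on phi a b -> smooth A ->
  (forall x, 0 <= x <= L -> Rabs (cos_integral phi lam 0 x) <= M) ->
  Rabs (RInt (fun t => A t * cos (lam * phi t)) 0 L) <=
    M * (sup_norm A 0 L + L1_norm_deriv A 0 L).
Proof.
  intros HL Ha Hb HR HA HM.
  set (F := fun x => cos_integral phi lam 0 x).
  assert (HM0 : 0 <= M).
  { specialize (HM 0 ltac:(lra)). rewrite cos_integral_point in HM.
    eapply Rle_trans; [apply Rabs_pos|apply HM]. }
  assert (CF : forall x, 0 <= x <= L -> continuous F x).
  { intros x Hx. apply ex_derive_continuous_R. eexists.
    eapply is_derive_cos_integral; eauto; lra. }
  assert (CdA : forall x, continuous (Derive A) x)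
    by (intros; apply ex_derive_continuous_R, (HA 1%nat)).
  rewrite (RInt_amplitude_by_parts phi lam L a b A) by auto.
  assert (B1 : Rabs (A L * F L) <= sup_norm A 0 L * M).
  { rewrite Rabs_mult. apply Rmult_le_compat; try apply Rabs_pos.
    - apply sup_norm_ge; auto; lra.
    - apply HM; lra. }
  assert (B2 : Rabs (RInt (fun t => Derive A t * F t) 0 L) <= L1_norm_deriv A 0 L * M).
  { unfold L1_norm_deriv. rewrite <- RInt_mult_const_r.
    2: { apply ex_RInt_continuous_on; try lra. intros; apply continuous_Rabs_comp; auto. }
    apply abs_RInt_le_RInt; [lra|..].
    - apply ex_RInt_continuous_on; [lra|]. intros; apply continuous_mult_R; auto.
    - apply ex_RInt_continuous_on; [lra|]. intros; apply continuous_mult_R;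
        [apply continuous_Rabs_comp; auto|apply continuous_const].
    - apply ex_RInt_continuous_on; [lra|].
      intros; apply continuous_Rabs_comp, continuous_mult_R; auto.
    - intros x Hx. rewrite Rabs_mult. apply Rmult_le_compat_l; [apply Rabs_pos|]. apply HM; auto. }
  pose proof (Rabs_triang (A L * F L) (- RInt (fun t => Derive A t * F t) 0 L)).
  rewrite Rabs_Ropp in *. unfold F, Rminus in *. nra.
Qed.

(** * Smoothness on open balls *)

Definition smooth_ball (f : R -> R) (c r : R) : Prop :=
  forall y, Rabs (y - c) < r -> forall n, ex_derive_n f n y.

Lemma locally_Rabs_ball c r y : Rabs (y - c) < r -> locally y (fun z => Rabs (z - c) < r).
Proof.
  intros H. assert (He : 0 < r - Rabs (y - c)) by lra.
  exists (mkposreal _ He). intros z Hz. cbn in Hz.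
  unfold AbsRing_ball, abs, minus, plus, opp in Hz; simpl in Hz.
  pose proof (Rabs_triang (z - y) (y - c)). replace (z - y + (y - c)) with (z - c) in H0 by ring.
  change (z + - y) with (z - y) in Hz. lra.
Qed.

Lemma locally_of_ball (P : R -> Prop) c r y : Rabs (y - c) < r ->
  (forall z, Rabs (z - c) < r -> P z) -> locally y P.
Proof. intros Hy H. eapply filter_imp; [|exact (locally_Rabs_ball c r y Hy)]. auto. Qed.

Lemma in_ball_center c r : 0 < r -> Rabs (c - c) < r.
Proof. intros. rewrite Rminus_diag, Rabs_R0. lra. Qed.

Section SmoothBall.

Variables (c r : R).

Lemma smooth_ball_locally f y n : smooth_ball f c r -> Rabs (y - c) < r ->
  locally y (fun z => forall k, (k <= n)%nat -> ex_derive_n f k z).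
Proof. intros H Hy. apply (locally_of_ball _ c r y Hy). intros z Hz k _. apply H; auto. Qed.

Lemma smooth_ball_ex_derive f n : 0 < r -> smooth_ball f c r -> ex_derive (Derive_n f n) c.
Proof. intros Hr H. apply (H c (in_ball_center c r Hr) (S n)). Qed.

Lemma smooth_ball_ext f g : smooth_ball f c r -> (forall y, f y = g y) -> smooth_ball g c r.
Proof. intros H E y Hy n. apply ex_derive_n_ext with f; auto. Qed.

Lemma smooth_ball_Derive_n f k : smooth_ball f c r -> smooth_ball (Derive_n f k) c r.
Proof.
  intros H y Hy [|n]; [exact I|]. simpl.
  apply ex_derive_ext with (f := Derive_n f (n + k)).
  - intros t; rewrite Derive_n_comp; auto.
  - apply (H y Hy (S (n + k))).
Qed.

Lemma smooth_ball_Derive f : smooth_ball f c r -> smooth_ball (Derive f) c r.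
Proof. apply (smooth_ball_Derive_n f 1). Qed.

Lemma smooth_ball_plus f g :
  smooth_ball f c r -> smooth_ball g c r -> smooth_ball (fun y => f y + g y) c r.
Proof. intros Hf Hg y Hy n. apply ex_derive_n_plus; eapply smooth_ball_locally; eauto. Qed.

Lemma smooth_ball_scal a f : smooth_ball f c r -> smooth_ball (fun y => a * f y) c r.
Proof. intros Hf y Hy n. apply ex_derive_n_scal_l; auto. Qed.

Lemma smooth_ball_opp f : smooth_ball f c r -> smooth_ball (fun y => - f y) c r.
Proof. intros Hf y Hy n. apply ex_derive_n_opp; auto. Qed.

Lemma smooth_ball_minus f g :
  smooth_ball f c r -> smooth_ball g c r -> smooth_ball (fun y => f y - g y) c r.
Proof. intros. apply smooth_ball_plus, smooth_ball_opp; auto. Qed.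

Lemma smooth_ball_const a : smooth_ball (fun _ => a) c r.
Proof. intros y Hy n. apply ex_derive_n_const. Qed.

Lemma smooth_ball_of_Derive_closed (P : (R -> R) -> Prop) :
  (forall h, P h -> forall y, Rabs (y - c) < r -> ex_derive h y) ->
  (forall h, P h -> exists h1 h2, P h1 /\ P h2 /\
     forall y, Rabs (y - c) < r -> Derive h y = h1 y + h2 y) ->
  forall h, P h -> smooth_ball h c r.
Proof.
  intros H0 H1.
  assert (claim : forall n h, P h -> forall y, Rabs (y - c) < r ->
            forall k, (k <= n)%nat -> ex_derive (Derive_n h k) y).
  { induction n as [|n IHn]; intros h Ph y Hy k Hk.
    { replace k with 0%nat by lia. apply H0; auto. }
    destruct k as [|k]; [apply H0; auto|].
    destruct (H1 h Ph) as [h1 [h2 [P1 [P2 E]]]].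
    assert (Hsmall : forall h', P h' -> forall z, Rabs (z - c) < r ->
              locally z (fun w => forall j, (j <= k)%nat -> ex_derive_n h' j w)).
    { intros h' Ph' z Hz. apply (locally_of_ball _ c r z Hz). intros w Hw [|j] Hj; [exact I|].
      apply IHn; auto. lia. }
    assert (Ek : forall z, Rabs (z - c) < r ->
              Derive_n h (S k) z = Derive_n h1 k z + Derive_n h2 k z).
    { intros z Hz. replace (S k) with (k + 1)%nat by lia. rewrite <- (Derive_n_comp h k 1).
      rewrite (Derive_n_ext_loc (Derive h) (fun z => h1 z + h2 z));
        [apply Derive_n_plus; auto|].
      apply (locally_of_ball _ c r z Hz). auto. }
    apply ex_derive_ext_loc with (f := fun z => Derive_n h1 k z + Derive_n h2 k z).
    - apply (locally_of_ball _ c r y Hy). intros; symmetry; apply Ek; auto.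
    - apply (@ex_derive_plus R_AbsRing R_NormedModule); apply IHn; auto; lia. }
  intros h Ph y Hy [|n]; [exact I|]. apply (claim n); auto.
Qed.

Lemma smooth_ball_mult f g :
  smooth_ball f c r -> smooth_ball g c r -> smooth_ball (fun y => f y * g y) c r.
Proof.
  intros Hf Hg.
  apply (smooth_ball_of_Derive_closed
           (fun h => exists f g, smooth_ball f c r /\ smooth_ball g c r /\ forall y, h y = f y * g y)).
  - intros h [f1 [g1 [H1 [H2 E]]]] y Hy. apply ex_derive_ext with (f := fun y => f1 y * g1 y); auto.
    apply ex_derive_mult; [apply (H1 y Hy 1%nat)|apply (H2 y Hy 1%nat)].
  - intros h [f1 [g1 [H1 [H2 E]]]].
    exists (fun y => Derive f1 y * g1 y), (fun y => f1 y * Derive g1 y). split; [|split].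
    + exists (Derive f1), g1. repeat split; auto. apply smooth_ball_Derive; auto.
    + exists f1, (Derive g1). repeat split; auto. apply smooth_ball_Derive; auto.
    + intros y Hy. rewrite (Derive_ext h (fun y => f1 y * g1 y)) by auto.
      apply Derive_mult; [apply (H1 y Hy 1%nat)|apply (H2 y Hy 1%nat)].
  - exists f, g. repeat split; auto.
Qed.

Lemma smooth_ball_pow2 f : smooth_ball f c r -> smooth_ball (fun y => f y ^ 2) c r.
Proof.
  intros H. apply smooth_ball_ext with (fun y => f y * f y); [apply smooth_ball_mult; auto|].
  intros; ring.
Qed.

(* Derivatives of [a / f^j] are again of this form. *)
Lemma smooth_ball_inv f : smooth_ball f c r -> (forall y, Rabs (y - c) < r -> f y <> 0) ->
  smooth_ball (fun y => / f y) c r.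
Proof.
  intros Hf Hnz.
  assert (G : forall h, (exists a j, smooth_ball a c r /\ forall y, h y = a y * (/ f y) ^ j) ->
            smooth_ball h c r).
  { apply smooth_ball_of_Derive_closed.
    - intros h [a [j [Ha E]]] y Hy. apply ex_derive_ext with (f := fun y => a y * (/ f y) ^ j); auto.
      pose proof (Hnz y Hy). pose proof (Ha y Hy 1%nat). pose proof (Hf y Hy 1%nat).
      auto_derive. repeat split; auto.
    - intros h [a [j [Ha E]]].
      exists (fun y => Derive a y * (/ f y) ^ j),
             (fun y => (- INR j * a y * Derive f y) * (/ f y) ^ (S j)).
      split; [|split].
      + exists (Derive a), j. split; auto. apply smooth_ball_Derive; auto.
      + exists (fun y => - INR j * a y * Derive f y), (S j). split; auto.
        apply smooth_ball_mult; [apply smooth_ball_mult|apply smooth_ball_Derive]; auto.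
        apply smooth_ball_const.
      + intros y Hy. rewrite (Derive_ext h (fun y => a y * (/ f y) ^ j)) by auto.
        pose proof (Hnz y Hy). pose proof (Ha y Hy 1%nat) as Ea. pose proof (Hf y Hy 1%nat) as Ef.
        apply is_derive_unique. auto_derive; [repeat split; auto|].
        change (fun x : R => a x) with a. change (fun x : R => f x) with f.
        destruct j; simpl; [ring|]. field. auto. }
  apply G. exists (fun _ => 1), 1%nat. split; [apply smooth_ball_const|]. intros; simpl; ring.
Qed.

End SmoothBall.

Lemma smooth_ball_subball f c r c' r' : smooth_ball f c r ->
  (forall y, Rabs (y - c') < r' -> Rabs (y - c) < r) -> smooth_ball f c' r'.
Proof. intros H H' y Hy n; apply H; auto. Qed.

Lemma smooth_ball_smaller f c r r' : smooth_ball f c r -> r' <= r -> smooth_ball f c r'.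
Proof. intros H Hr. apply (smooth_ball_subball f c r); [exact H|intros; lra]. Qed.

Lemma smooth_ball_shift_center f c r y : smooth_ball f c r -> Rabs (y - c) < r ->
  smooth_ball f y (r - Rabs (y - c)).
Proof.
  intros H Hy. apply (smooth_ball_subball f c r); auto. intros z Hz.
  pose proof (Rabs_triang (z - y) (y - c)). replace (z - y + (y - c)) with (z - c) in H0 by ring.
  lra.
Qed.

Lemma Derive_n_lin3 (f g h : R -> R) p q s i j t r : 0 < r ->
  smooth_ball f t r -> smooth_ball g t r -> smooth_ball h t r ->
  Derive_n (fun y => p * Derive_n f i y + q * Derive_n g i y + s * Derive_n h i y) j t =
  p * Derive_n f (j + i) t + q * Derive_n g (j + i) t + s * Derive_n h (j + i) t.
Proof.
  intros Hr Hf Hg Hh. pose proof (in_ball_center t r Hr) as H0.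
  rewrite Derive_n_plus; [rewrite Derive_n_plus|..].
  - rewrite !Derive_n_scal_l, !Derive_n_comp. reflexivity.
  - apply (smooth_ball_locally t r); auto. apply smooth_ball_scal, smooth_ball_Derive_n; auto.
  - apply (smooth_ball_locally t r); auto. apply smooth_ball_scal, smooth_ball_Derive_n; auto.
  - apply (smooth_ball_locally t r); auto.
    apply smooth_ball_plus; apply smooth_ball_scal, smooth_ball_Derive_n; auto.
  - apply (smooth_ball_locally t r); auto. apply smooth_ball_scal, smooth_ball_Derive_n; auto.
Qed.

Lemma CV_radius_ge_of_ex_pseries (a : nat -> R) z : ex_pseries a z -> Rbar_le (Rabs z) (CV_radius a).
Proof.
  intros H. apply ex_series_lim_0 in H.
  destruct (filterlim_bounded (K := R_AbsRing) (V := R_NormedModule) _ (ex_intro _ 0 H)) as [M HM].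
  destruct (CV_radius_bounded a) as [Hub _]. apply Hub.
  exists M. intros n. specialize (HM n).
  replace (Rabs (a n * Rabs z ^ n)) with (Rabs (z ^ n * a n))
    by (rewrite !Rabs_mult, !RPow_abs, Rabs_Rabsolu; ring).
  unfold norm in HM; simpl in HM. unfold abs in HM; simpl in HM. unfold scal in HM; simpl in HM.
  unfold mult in HM; simpl in HM. rewrite pow_n_pow in HM. exact HM.
Qed.

Lemma CV_radius_gt_of_ball (a : nat -> R) r z :
  (forall y, Rabs y < r -> ex_pseries a y) -> Rabs z < r -> Rbar_lt (Rabs z) (CV_radius a).
Proof.
  intros H Hz. set (z' := (Rabs z + r) / 2).
  pose proof (Rabs_pos z).
  assert (Ez : Rabs z' = z') by (apply Rabs_pos_eq; unfold z'; lra).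
  pose proof (CV_radius_ge_of_ex_pseries a z' (H z' ltac:(rewrite Ez; unfold z'; lra))).
  assert (Rabs z < Rabs z') by (rewrite Ez; unfold z'; lra).
  destruct (CV_radius a); simpl in *; auto. lra.
Qed.

Lemma analytic_at_smooth_ball f x : analytic_at f x -> exists r, 0 < r /\ smooth_ball f x r.
Proof.
  intros [a [r [Hr H]]]. exists r. split; auto.
  assert (Hcv : forall y, Rabs (y - x) < r -> Rbar_lt (Rabs (y - x)) (CV_radius a)).
  { intros y Hy. apply CV_radius_gt_of_ball with r; auto. intros z Hz.
    specialize (H (z + x) ltac:(replace (z + x - x) with z by ring; auto)).
    replace (z + x - x) with z in H by ring. eexists; eauto. }
  intros y Hy n.
  apply ex_derive_n_ext_loc with (f := fun z => PSeries a (z + - x)).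
  - apply (locally_of_ball _ x r y Hy). intros z Hz. replace (z + - x) with (z - x) by ring.
    apply is_pseries_unique, H; auto.
  - apply ex_derive_n_comp_trans, ex_derive_n_PSeries, Hcv; auto.
Qed.

(** * Vanishing jets *)

Lemma continuous_pos_ball (f : R -> R) x : continuous f x -> 0 < f x ->
  exists r, 0 < r /\ forall y, Rabs (y - x) < r -> 0 < f y.
Proof.
  intros Hc Hn. apply continuity_pt_of_continuous in Hc.
  destruct (Hc (f x) Hn) as [al [Hal H]].
  exists al. split; auto. intros y Hy. destruct (Req_dec y x) as [->|Hne]; [auto|].
  specialize (H y (conj (conj I (not_eq_sym Hne)) Hy)). unfold R_dist in H.
  apply Rabs_lt_between' in H. lra.
Qed.

Definition jet_vanishes (f : R -> R) (t0 : R) (m : nat) : Prop :=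
  forall j, (j <= m)%nat -> Derive_n f j t0 = 0.

Lemma jet_vanishes_le f t0 m m' : jet_vanishes f t0 m -> (m' <= m)%nat -> jet_vanishes f t0 m'.
Proof. intros H Hm j Hj. apply H. lia. Qed.

Lemma jet_vanishes_Derive f t0 m : jet_vanishes f t0 (S m) -> jet_vanishes (Derive f) t0 m.
Proof.
  intros H j Hj. change (Derive f) with (Derive_n f 1). rewrite Derive_n_comp. apply H. lia.
Qed.

Lemma jet_vanishes_ext_loc f g t0 m r : 0 < r -> (forall y, Rabs (y - t0) < r -> f y = g y) ->
  jet_vanishes f t0 m -> jet_vanishes g t0 m.
Proof.
  intros Hr E H j Hj. rewrite <- (Derive_n_ext_loc f g); [apply H; auto|].
  apply (locally_of_ball _ t0 r t0 (in_ball_center t0 r Hr)). auto.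
Qed.

Lemma jet_vanishes_plus f g t0 m r : 0 < r -> smooth_ball f t0 r -> smooth_ball g t0 r ->
  jet_vanishes f t0 m -> jet_vanishes g t0 m -> jet_vanishes (fun y => f y + g y) t0 m.
Proof.
  intros Hr Hf Hg H1 H2 j Hj. pose proof (in_ball_center t0 r Hr).
  rewrite Derive_n_plus; [rewrite H1, H2 by auto; ring|..];
    apply (smooth_ball_locally t0 r); auto.
Qed.

Lemma jet_vanishes_mult m : forall f g t0 r, 0 < r -> smooth_ball f t0 r -> smooth_ball g t0 r ->
  jet_vanishes f t0 m -> jet_vanishes (fun y => f y * g y) t0 m.
Proof.
  induction m as [|m IHm]; intros f g t0 r Hr Hf Hg Hv j Hj;
    pose proof (Hv 0%nat ltac:(lia)) as H0; simpl in H0.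
  { replace j with 0%nat by lia. simpl. rewrite H0. ring. }
  destruct j as [|j]; [simpl; rewrite H0; ring|].
  replace (S j) with (j + 1)%nat by lia. rewrite <- Derive_n_comp.
  change (Derive_n (fun y => f y * g y) 1) with (Derive (fun y => f y * g y)).
  rewrite (Derive_n_ext_loc _ (fun y => Derive f y * g y + f y * Derive g y)).
  2: { apply (locally_of_ball _ t0 r t0 (in_ball_center t0 r Hr)). intros y Hy.
       apply Derive_mult; [apply (Hf y Hy 1%nat)|apply (Hg y Hy 1%nat)]. }
  apply (jet_vanishes_plus _ _ t0 m r); auto; try lia.
  - apply smooth_ball_mult; auto. apply smooth_ball_Derive; auto.
  - apply smooth_ball_mult; auto. apply smooth_ball_Derive; auto.
  - apply (IHm (Derive f) g t0 r); auto.
    + apply smooth_ball_Derive; auto.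
    + apply jet_vanishes_Derive; auto.
  - apply (IHm f (Derive g) t0 r); auto.
    + apply smooth_ball_Derive; auto.
    + apply jet_vanishes_le with (S m); auto.
Qed.

Lemma jet_vanishes_of_mul f g h t0 m r : 0 < r ->
  smooth_ball f t0 r -> smooth_ball h t0 r -> 0 < h t0 ->
  (forall y, Rabs (y - t0) < r -> 0 < h y -> g y * h y = f y) ->
  jet_vanishes f t0 m -> jet_vanishes g t0 m.
Proof.
  intros Hr Sf Sh Hh0 E Vf.
  destruct (continuous_pos_ball h t0) as [r1 [Hr1 Hpos]]; [|exact Hh0|].
  { apply ex_derive_continuous_R, (Sh t0 (in_ball_center t0 r Hr) 1%nat). }
  set (r' := Rmin r r1).
  assert (Hr' : 0 < r') by (apply Rmin_pos; auto).
  assert (Br : forall y, Rabs (y - t0) < r' -> Rabs (y - t0) < r /\ Rabs (y - t0) < r1).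
  { intros y Hy. unfold r' in Hy. pose proof (Rmin_l r r1). pose proof (Rmin_r r r1). lra. }
  apply (jet_vanishes_ext_loc (fun y => f y * / h y) _ t0 m r'); auto.
  - intros y Hy. destruct (Br y Hy) as [Hy1 Hy2]. specialize (Hpos y Hy2).
    rewrite <- (E y Hy1 Hpos). field. lra.
  - apply (jet_vanishes_mult m _ _ t0 r'); auto.
    + apply smooth_ball_subball with t0 r; [auto|intros; apply Br; auto].
    + apply smooth_ball_inv.
      * apply smooth_ball_subball with t0 r; [auto|intros; apply Br; auto].
      * intros y Hy. apply Rgt_not_eq, Hpos, Br; auto.
Qed.

(** * Frenet quantities in coordinates *)

Definition curve_x (g : R -> v3) : R -> R := fun s => vx (g s).
Definition curve_y (g : R -> v3) : R -> R := fun s => vy (g s).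
Definition curve_z (g : R -> v3) : R -> R := fun s => vz (g s).

Definition Dn3 (g : R -> v3) (k : nat) (t : R) : v3 :=
  mkv3 (Derive_n (curve_x g) k t) (Derive_n (curve_y g) k t) (Derive_n (curve_z g) k t).

Definition det3 (u v w : v3) : R := dot3 u (cross3 v w).

Definition curve_smooth_ball (g : R -> v3) (t r : R) : Prop :=
  smooth_ball (curve_x g) t r /\ smooth_ball (curve_y g) t r /\ smooth_ball (curve_z g) t r.

Ltac v3_simpl := unfold det3, dot3, cross3, Dn3; cbn [vx vy vz mkv3 fst snd].

Ltac smooth_ball_tac := repeat match goal with
  | |- smooth_ball (fun y => Derive_n ?f ?k y) ?c ?r => apply (smooth_ball_Derive_n c r f k); assumption
  | |- smooth_ball (fun y => @?F y + @?G y) _ _ => apply (smooth_ball_plus _ _ F G)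
  | |- smooth_ball (fun y => @?F y - @?G y) _ _ => apply (smooth_ball_minus _ _ F G)
  | |- smooth_ball (fun y => @?F y * @?G y) _ _ => apply (smooth_ball_mult _ _ F G)
  | |- smooth_ball (fun _ => ?a) _ _ => apply smooth_ball_const
  end.

(* [torsion] unfolds to this expression in the derivatives [u_i] of the coordinates
   and [w = 1 / |u'|]. *)
Lemma torsion_expansion (u1 u2 u3 w : R -> R) t :
  ex_derive u1 t -> ex_derive u2 t -> ex_derive u3 t ->
  ex_derive (Derive u1) t -> ex_derive (Derive u2) t -> ex_derive (Derive u3) t -> ex_derive w t ->
  - (Derive (fun s => u2 s * (w s * Derive u3 s) - u3 s * (w s * Derive u2 s)) t * (w t * Derive u1 t) +
     Derive (fun s => u3 s * (w s * Derive u1 s) - u1 s * (w s * Derive u3 s)) t * (w t * Derive u2 t) +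
     Derive (fun s => u1 s * (w s * Derive u2 s) - u2 s * (w s * Derive u1 s)) t * (w t * Derive u3 t))
  = w t ^ 2 * (u1 t * (Derive u2 t * Derive (Derive u3) t - Derive u3 t * Derive (Derive u2) t)
             + u2 t * (Derive u3 t * Derive (Derive u1) t - Derive u1 t * Derive (Derive u3) t)
             + u3 t * (Derive u1 t * Derive (Derive u2) t - Derive u2 t * Derive (Derive u1) t)).
Proof.
  intros E1 E2 E3 F1 F2 F3 Ew.
  erewrite (is_derive_unique (fun s => u2 s * (w s * Derive u3 s) - u3 s * (w s * Derive u2 s)))
    by (auto_derive; [repeat split; auto|reflexivity]).
  erewrite (is_derive_unique (fun s => u3 s * (w s * Derive u1 s) - u1 s * (w s * Derive u3 s)))
    by (auto_derive; [repeat split; auto|reflexivity]).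
  erewrite (is_derive_unique (fun s => u1 s * (w s * Derive u2 s) - u2 s * (w s * Derive u1 s)))
    by (auto_derive; [repeat split; auto|reflexivity]).
  change (fun x => u1 x) with u1. change (fun x => u2 x) with u2. change (fun x => u3 x) with u3.
  change (fun x => w x) with w.
  change (fun x => Derive u1 x) with (Derive u1). change (fun x => Derive u2 x) with (Derive u2).
  change (fun x => Derive u3 x) with (Derive u3).
  ring.
Qed.

Lemma torsion_formula (g : R -> v3) t :
  (forall k, (k <= 3)%nat -> ex_derive (Derive_n (curve_x g) k) t /\
     ex_derive (Derive_n (curve_y g) k) t /\ ex_derive (Derive_n (curve_z g) k) t) ->
  0 < dot3 (Dn3 g 2 t) (Dn3 g 2 t) ->
  torsion g t = det3 (Dn3 g 1 t) (Dn3 g 2 t) (Dn3 g 3 t) / dot3 (Dn3 g 2 t) (Dn3 g 2 t).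
Proof.
  intros HE Hq.
  set (u1 := Derive (curve_x g)). set (u2 := Derive (curve_y g)). set (u3 := Derive (curve_z g)).
  set (q := fun s => Derive u1 s * Derive u1 s + Derive u2 s * Derive u2 s + Derive u3 s * Derive u3 s).
  assert (Hq' : 0 < q t) by exact Hq.
  destruct (HE 1%nat ltac:(lia)) as [E1 [E2 E3]].
  destruct (HE 2%nat ltac:(lia)) as [F1 [F2 F3]].
  destruct (HE 3%nat ltac:(lia)) as [H1 [H2 H3]].
  change (torsion g t) with
    (- (Derive (fun s => u2 s * (/ sqrt (q s) * Derive u3 s) - u3 s * (/ sqrt (q s) * Derive u2 s)) t
          * (/ sqrt (q t) * Derive u1 t) +
        Derive (fun s => u3 s * (/ sqrt (q s) * Derive u1 s) - u1 s * (/ sqrt (q s) * Derive u3 s)) t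
          * (/ sqrt (q t) * Derive u2 t) +
        Derive (fun s => u1 s * (/ sqrt (q s) * Derive u2 s) - u2 s * (/ sqrt (q s) * Derive u1 s)) t
          * (/ sqrt (q t) * Derive u3 t))).
  rewrite (torsion_expansion u1 u2 u3 (fun s => / sqrt (q s))); auto.
  2: { assert (0 < sqrt (q t)) by (apply sqrt_lt_R0; exact Hq'). unfold q.
       auto_derive. repeat split; auto. unfold q in *. lra. }
  change (det3 (Dn3 g 1 t) (Dn3 g 2 t) (Dn3 g 3 t) / dot3 (Dn3 g 2 t) (Dn3 g 2 t)) with
    ((u1 t * (Derive u2 t * Derive (Derive u3) t - Derive u3 t * Derive (Derive u2) t)
     + u2 t * (Derive u3 t * Derive (Derive u1) t - Derive u1 t * Derive (Derive u3) t)
     + u3 t * (Derive u1 t * Derive (Derive u2) t - Derive u2 t * Derive (Derive u1) t)) / q t).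
  rewrite pow_inv, <- Rsqr_pow2, Rsqr_sqrt by lra. field. lra.
Qed.

Lemma det3_mul_dot3_cross (u v w n : v3) :
  det3 u v w * dot3 n (cross3 u v) =
  dot3 n u * dot3 (cross3 v w) (cross3 u v) + dot3 n v * dot3 (cross3 w u) (cross3 u v) +
  dot3 n w * dot3 (cross3 u v) (cross3 u v).
Proof. unfold det3, dot3, cross3; cbn. ring. Qed.

Section TorsionJet.

Variables (g : R -> v3) (t0 r : R) (m : nat).
Hypotheses (Hr : 0 < r) (Hg : curve_smooth_ball g t0 r).

(* With [n0 = g'(t0) x g''(t0)], [det (g', g'', g''')] is a combination of the
   [<n0, g^(i)>], i = 1, 2, 3, divided by [<n0, g' x g''>], which is [|n0|^2 > 0] at [t0]. *)
Lemma det3_jet_vanishes :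
  0 < dot3 (cross3 (Dn3 g 1 t0) (Dn3 g 2 t0)) (cross3 (Dn3 g 1 t0) (Dn3 g 2 t0)) ->
  (forall k, (3 <= k <= m + 3)%nat -> det3 (Dn3 g 1 t0) (Dn3 g 2 t0) (Dn3 g k t0) = 0) ->
  jet_vanishes (fun y => det3 (Dn3 g 1 y) (Dn3 g 2 y) (Dn3 g 3 y)) t0 m.
Proof.
  intros Hn0 Hdet. destruct Hg as [Sx [Sy Sz]].
  assert (Hdet' : forall k, (1 <= k <= m + 3)%nat -> det3 (Dn3 g 1 t0) (Dn3 g 2 t0) (Dn3 g k t0) = 0).
  { intros k Hk. destruct (Compare_dec.le_lt_dec 3 k); [apply Hdet; lia|].
    destruct k as [|[|[|k]]]; try lia; v3_simpl; ring. }
  set (n0 := cross3 (Dn3 g 1 t0) (Dn3 g 2 t0)).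
  set (A := fun (i : nat) y => vx n0 * Derive_n (curve_x g) i y + vy n0 * Derive_n (curve_y g) i y
                               + vz n0 * Derive_n (curve_z g) i y).
  assert (SA : forall i, smooth_ball (A i) t0 r) by (intros i; unfold A; smooth_ball_tac).
  assert (VA : forall i (F : R -> R), (1 <= i <= 3)%nat -> smooth_ball F t0 r ->
            jet_vanishes (fun y => A i y * F y) t0 m).
  { intros i F Hi SF. apply (jet_vanishes_mult m _ _ t0 r); auto. intros j Hj.
    unfold A. rewrite (Derive_n_lin3 _ _ _ _ _ _ i j t0 r) by auto.
    rewrite <- (Hdet' (j + i)%nat) by lia. unfold n0. v3_simpl. ring. }
  set (P := fun y => dot3 (cross3 (Dn3 g 2 y) (Dn3 g 3 y)) (cross3 (Dn3 g 1 y) (Dn3 g 2 y))).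
  set (Q := fun y => dot3 (cross3 (Dn3 g 3 y) (Dn3 g 1 y)) (cross3 (Dn3 g 1 y) (Dn3 g 2 y))).
  set (S := fun y => dot3 (cross3 (Dn3 g 1 y) (Dn3 g 2 y)) (cross3 (Dn3 g 1 y) (Dn3 g 2 y))).
  assert (SP : smooth_ball P t0 r) by (unfold P; v3_simpl; smooth_ball_tac).
  assert (SQ : smooth_ball Q t0 r) by (unfold Q; v3_simpl; smooth_ball_tac).
  assert (SS : smooth_ball S t0 r) by (unfold S; v3_simpl; smooth_ball_tac).
  apply (jet_vanishes_of_mul (fun y => A 1%nat y * P y + A 2%nat y * Q y + A 3%nat y * S y) _
           (fun y => dot3 n0 (cross3 (Dn3 g 1 y) (Dn3 g 2 y))) t0 m r Hr).
  - smooth_ball_tac; auto.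
  - v3_simpl. smooth_ball_tac.
  - exact Hn0.
  - intros y _ _. rewrite det3_mul_dot3_cross. reflexivity.
  - apply (jet_vanishes_plus _ _ t0 m r); auto.
    + apply smooth_ball_plus; apply smooth_ball_mult; auto.
    + apply smooth_ball_mult; auto.
    + apply (jet_vanishes_plus _ _ t0 m r); auto; apply smooth_ball_mult; auto.
Qed.

Lemma torsion_jet_vanishes :
  0 < dot3 (Dn3 g 2 t0) (Dn3 g 2 t0) ->
  jet_vanishes (fun y => det3 (Dn3 g 1 y) (Dn3 g 2 y) (Dn3 g 3 y)) t0 m ->
  jet_vanishes (torsion g) t0 m.
Proof.
  intros Hq HD. pose proof Hg as [Sx [Sy Sz]].
  apply (jet_vanishes_of_mul (fun y => det3 (Dn3 g 1 y) (Dn3 g 2 y) (Dn3 g 3 y)) _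
           (fun y => dot3 (Dn3 g 2 y) (Dn3 g 2 y)) t0 m r Hr);
    [v3_simpl; smooth_ball_tac|v3_simpl; smooth_ball_tac|exact Hq| |exact HD].
  intros y Hy Hqy. rewrite torsion_formula; [field; lra| |exact Hqy].
  intros k Hk. repeat split; [apply (Sx y Hy (S k))|apply (Sy y Hy (S k))|apply (Sz y Hy (S k))].
Qed.

End TorsionJet.

(** * Uniform nondegeneracy of the phases *)

Lemma Rabs_mul_sub_mul_le a b c d B : Rabs a <= B -> Rabs b <= B -> Rabs c <= B -> Rabs d <= B ->
  Rabs (a * b - c * d) <= 2 * B ^ 2.
Proof.
  intros. unfold Rminus. eapply Rle_trans; [apply Rabs_triang|]. rewrite Rabs_Ropp, !Rabs_mult.
  pose proof (Rabs_pos a). pose proof (Rabs_pos b). pose proof (Rabs_pos c). pose proof (Rabs_pos d).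
  assert (Rabs a * Rabs b <= B * B) by (apply Rmult_le_compat; auto).
  assert (Rabs c * Rabs d <= B * B) by (apply Rmult_le_compat; auto).
  simpl. lra.
Qed.

Lemma Rabs_lin3_le p q s x y z e M : Rabs p <= e -> Rabs q <= e -> Rabs s <= e ->
  Rabs x <= M -> Rabs y <= M -> Rabs z <= M -> Rabs (p * x + q * y + s * z) <= 3 * e * M.
Proof.
  intros. eapply Rle_trans; [apply Rabs_triang|].
  eapply Rle_trans; [apply Rplus_le_compat_r, Rabs_triang|]. rewrite !Rabs_mult.
  pose proof (Rabs_pos p). pose proof (Rabs_pos q). pose proof (Rabs_pos s).
  pose proof (Rabs_pos x). pose proof (Rabs_pos y). pose proof (Rabs_pos z).
  assert (Rabs p * Rabs x <= e * M) by (apply Rmult_le_compat; auto).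
  assert (Rabs q * Rabs y <= e * M) by (apply Rmult_le_compat; auto).
  assert (Rabs s * Rabs z <= e * M) by (apply Rmult_le_compat; auto).
  lra.
Qed.

Definition vec_bounded (u : v3) (B : R) : Prop :=
  Rabs (vx u) <= B /\ Rabs (vy u) <= B /\ Rabs (vz u) <= B.

Lemma dot3_self_nonneg u : 0 <= dot3 u u.
Proof.
  unfold dot3. pose proof (Rle_0_sqr (vx u)). pose proof (Rle_0_sqr (vy u)).
  pose proof (Rle_0_sqr (vz u)). unfold Rsqr in *. lra.
Qed.

Lemma dot3_self_of_norm3 u : norm3 u = 1 -> dot3 u u = 1.
Proof.
  intros H. rewrite <- (sqrt_sqrt (dot3 u u)) by apply dot3_self_nonneg.
  unfold norm3 in H. rewrite H. ring.
Qed.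

Lemma unit_vec_bounded xi : dot3 xi xi = 1 -> vec_bounded xi 1.
Proof.
  intros H. unfold dot3 in H.
  assert (A : forall a, a * a <= 1 -> Rabs a <= 1).
  { intros a Ha. rewrite <- (Rabs_pos_eq 1) by lra. apply Rsqr_le_abs_0. unfold Rsqr. lra. }
  pose proof (Rle_0_sqr (vx xi)). pose proof (Rle_0_sqr (vy xi)). pose proof (Rle_0_sqr (vz xi)).
  unfold Rsqr in *. repeat split; apply A; lra.
Qed.

Lemma Rabs_dot3_le xi v B : dot3 xi xi = 1 -> vec_bounded v B -> Rabs (dot3 xi v) <= 3 * B.
Proof.
  intros H [H1 [H2 H3]]. destruct (unit_vec_bounded xi H) as [U1 [U2 U3]].
  replace (3 * B) with (3 * 1 * B) by ring. apply Rabs_lin3_le; auto.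
Qed.

(* Cramer: [det (u, v, w) xi] is a combination of [<xi, u>], [<xi, v>], [<xi, w>]
   with cofactors of size [2 B^2]. *)
Lemma det3_sq_le_of_dot3_small (u v w xi : v3) B e : dot3 xi xi = 1 ->
  vec_bounded u B -> vec_bounded v B -> vec_bounded w B ->
  Rabs (dot3 xi u) <= e -> Rabs (dot3 xi v) <= e -> Rabs (dot3 xi w) <= e ->
  det3 u v w ^ 2 <= 108 * e ^ 2 * B ^ 4.
Proof.
  intros Hxi [u1 [u2 u3]] [v1 [v2 v3]] [w1 [w2 w3]] Ha Hb Hc.
  destruct u as [[ux uy] uz]; destruct v as [[vx' vy'] vz']; destruct w as [[wx wy] wz];
  destruct xi as [[a b] c]. unfold det3, dot3, cross3, mkv3 in *; cbn in *.
  set (d := ux * (vy' * wz - vz' * wy) + uy * (vz' * wx - vx' * wz) + uz * (vx' * wy - vy' * wx)).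
  set (A := a * ux + b * uy + c * uz). set (Bv := a * vx' + b * vy' + c * vz').
  set (C := a * wx + b * wy + c * wz).
  assert (HB : 0 <= B) by (pose proof (Rabs_pos ux); lra).
  assert (Y : forall p x y z, d * p = A * x + Bv * y + C * z ->
            Rabs x <= 2 * B ^ 2 -> Rabs y <= 2 * B ^ 2 -> Rabs z <= 2 * B ^ 2 ->
            (d * p) ^ 2 <= (3 * e * (2 * B ^ 2)) ^ 2).
  { intros p x y z E Hx Hy Hz. rewrite E, <- (pow2_abs (A * x + Bv * y + C * z)).
    pose proof (Rabs_pos (A * x + Bv * y + C * z)).
    assert (Rabs (A * x + Bv * y + C * z) <= 3 * e * (2 * B ^ 2)) by (apply Rabs_lin3_le; auto).
    nra. }
  assert (Y1 := Y a (vy' * wz - vz' * wy) (wy * uz - wz * uy) (uy * vz' - uz * vy')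
                  ltac:(unfold d, A, Bv, C; nra)).
  assert (Y2 := Y b (vz' * wx - vx' * wz) (wz * ux - wx * uz) (uz * vx' - ux * vz')
                  ltac:(unfold d, A, Bv, C; nra)).
  assert (Y3 := Y c (vx' * wy - vy' * wx) (wx * uy - wy * ux) (ux * vy' - uy * vx')
                  ltac:(unfold d, A, Bv, C; nra)).
  assert (E : d ^ 2 = (d * a) ^ 2 + (d * b) ^ 2 + (d * c) ^ 2).
  { replace ((d * a) ^ 2 + (d * b) ^ 2 + (d * c) ^ 2) with (d ^ 2 * (a * a + b * b + c * c)) by ring.
    rewrite Hxi. ring. }
  assert (F : d ^ 2 <= 108 * e ^ 2 * B ^ 4).
  { rewrite E. replace (108 * e ^ 2 * B ^ 4) with (3 * (3 * e * (2 * B ^ 2)) ^ 2) by ring.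
    pose proof (Y1 ltac:(apply Rabs_mul_sub_mul_le; auto) ltac:(apply Rabs_mul_sub_mul_le; auto)
                   ltac:(apply Rabs_mul_sub_mul_le; auto)).
    pose proof (Y2 ltac:(apply Rabs_mul_sub_mul_le; auto) ltac:(apply Rabs_mul_sub_mul_le; auto)
                   ltac:(apply Rabs_mul_sub_mul_le; auto)).
    pose proof (Y3 ltac:(apply Rabs_mul_sub_mul_le; auto) ltac:(apply Rabs_mul_sub_mul_le; auto)
                   ltac:(apply Rabs_mul_sub_mul_le; auto)).
    lra. }
  exact F.
Qed.

Fixpoint det_sum (g : R -> v3) (n : nat) (t : R) : R :=
  match n with
  | O => 0
  | S n' => det_sum g n' t + det3 (Dn3 g 1 t) (Dn3 g 2 t) (Dn3 g (3 + n') t) ^ 2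
  end.

Lemma det_sum_nonneg g n t : 0 <= det_sum g n t.
Proof.
  induction n; cbn [det_sum]; [lra|].
  pose proof (pow2_ge_0 (det3 (Dn3 g 1 t) (Dn3 g 2 t) (Dn3 g (3 + n) t))). lra.
Qed.

Lemma det_sum_ge g n t k : (k < n)%nat ->
  det3 (Dn3 g 1 t) (Dn3 g 2 t) (Dn3 g (3 + k) t) ^ 2 <= det_sum g n t.
Proof.
  induction n; intros Hk; [lia|]. cbn [det_sum].
  pose proof (pow2_ge_0 (det3 (Dn3 g 1 t) (Dn3 g 2 t) (Dn3 g (3 + n) t))).
  destruct (Nat.eq_dec k n) as [->|Hne].
  - pose proof (det_sum_nonneg g n t). lra.
  - pose proof (IHn ltac:(lia)). lra.
Qed.

Lemma det_sum_le g n t M :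
  (forall k, (k < n)%nat -> det3 (Dn3 g 1 t) (Dn3 g 2 t) (Dn3 g (3 + k) t) ^ 2 <= M) ->
  det_sum g n t <= INR n * M.
Proof.
  induction n; intros H; [simpl; lra|]. rewrite S_INR. cbn [det_sum].
  pose proof (IHn ltac:(intros; apply H; lia)). pose proof (H n ltac:(lia)). lra.
Qed.

Lemma smooth_ball_det_sum g n t r : curve_smooth_ball g t r -> smooth_ball (det_sum g n) t r.
Proof.
  intros [H1 [H2 H3]]. induction n.
  - apply (smooth_ball_ext _ _ (fun _ => 0)); [apply smooth_ball_const|reflexivity].
  - apply (smooth_ball_plus _ _ (det_sum g n)); auto.
    apply (smooth_ball_pow2 _ _ (fun y => det3 (Dn3 g 1 y) (Dn3 g 2 y) (Dn3 g (3 + n) y))).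
    v3_simpl. smooth_ball_tac.
Qed.

(* If [xi] were almost orthogonal to [g^(1), ..., g^(m+3)], all the determinants in
   [det_sum] would be small. *)
Lemma phase_derivative_lower_bound g L m B c0 : 0 < c0 -> 0 <= B ->
  (forall k t, (k <= m + 3)%nat -> 0 <= t <= L -> vec_bounded (Dn3 g k t) B) ->
  (forall t, 0 <= t <= L -> c0 <= det_sum g (S m) t) ->
  exists nu, 0 < nu <= 1 /\ forall xi t, dot3 xi xi = 1 -> 0 <= t <= L ->
    exists k, (1 <= k <= m + 3)%nat /\ nu <= Rabs (dot3 xi (Dn3 g k t)).
Proof.
  intros Hc0 HB HBd Hmin.
  set (D := 216 * INR (S m) * (B ^ 4 + 1)).
  assert (HSm : 0 < INR (S m)) by (apply lt_0_INR; lia).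
  assert (HB4 : 0 <= B ^ 4) by (apply pow_le; auto).
  assert (HD : 0 < D) by (unfold D; apply Rmult_lt_0_compat; lra).
  set (nu := Rmin 1 (c0 / D)).
  assert (Hnu : 0 < nu) by (apply Rmin_pos; [lra|apply Rdiv_lt_0_compat; auto]).
  assert (Hnu1 : nu <= 1) by apply Rmin_l.
  assert (Hnu2 : nu <= c0 / D) by apply Rmin_r.
  assert (Hsmall : INR (S m) * (108 * nu ^ 2 * B ^ 4) < c0).
  { assert (E : INR (S m) * (108 * (c0 / D) * B ^ 4) = c0 / 2 * (B ^ 4 / (B ^ 4 + 1)))
      by (unfold D; field; lra).
    assert (F : B ^ 4 / (B ^ 4 + 1) < 1).
    { apply (Rmult_lt_reg_r (B ^ 4 + 1)); [lra|].
      unfold Rdiv. rewrite Rmult_assoc, Rinv_l by lra. lra. }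
    assert (G0 : 0 <= B ^ 4 / (B ^ 4 + 1)) by (apply Rdiv_le_0_compat; lra).
    assert (nu ^ 2 <= nu) by (simpl; nra).
    assert (INR (S m) * (108 * nu ^ 2 * B ^ 4) <= INR (S m) * (108 * (c0 / D) * B ^ 4)).
    { apply Rmult_le_compat_l; [lra|]. apply Rmult_le_compat_r; [auto|]. nra. }
    nra. }
  exists nu. split; [lra|]. intros xi t Hxi Ht. apply Classical_Prop.NNPP. intros Hno.
  assert (Hlt : forall k, (1 <= k <= m + 3)%nat -> Rabs (dot3 xi (Dn3 g k t)) <= nu).
  { intros k Hk. destruct (Rle_lt_dec (Rabs (dot3 xi (Dn3 g k t))) nu); auto.
    exfalso. apply Hno. exists k. split; auto. lra. }
  assert (Hh : det_sum g (S m) t <= INR (S m) * (108 * nu ^ 2 * B ^ 4)).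
  { apply det_sum_le. intros k Hk.
    apply det3_sq_le_of_dot3_small with xi; auto; try (apply HBd; auto; lia); apply Hlt; lia. }
  pose proof (Hmin t Ht). lra.
Qed.

(* Near a point where [|phi^(k)| >= nu], it stays [>= nu/2] over a length [nu / (2 Kb)]. *)
Lemma derivative_cover_of_lower_bound phi L K nu Kb N : 0 < L -> 0 < nu -> 0 < Kb ->
  smooth_on phi 0 L -> (1 <= N)%nat -> Kb * (L / INR N) < nu / 2 ->
  (forall k t, (k <= K)%nat -> 0 <= t <= L -> Rabs (Derive_n phi (S k) t) <= Kb) ->
  (forall t, 0 <= t <= L -> exists k, (1 <= k <= K)%nat /\ nu <= Rabs (Derive_n phi k t)) ->
  derivative_cover phi L K (nu / 2) N.
Proof.
  intros HL Hnu HKb HR HN HNd HDn Low i Hi.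
  assert (HNr : 0 < INR N) by (apply lt_0_INR; lia).
  set (p := INR i * (L / INR N)).
  assert (HLN : 0 < L / INR N) by (apply Rdiv_lt_0_compat; lra).
  assert (Hp0 : 0 <= p) by (unfold p; apply Rmult_le_pos; [apply pos_INR|lra]).
  assert (HpL : INR (S i) * (L / INR N) <= L).
  { replace L with (INR N * (L / INR N)) at 2 by (field; lra).
    apply Rmult_le_compat_r; [lra|]. apply le_INR; lia. }
  assert (Hpp : INR (S i) * (L / INR N) = p + L / INR N) by (unfold p; rewrite S_INR; ring).
  destruct (Low p ltac:(lra)) as [k [Hk Hkv]].
  exists k. split; [lia|].
  assert (Lip : forall t, p <= t <= INR (S i) * (L / INR N) ->
     Rabs (Derive_n phi k t - Derive_n phi k p) <= nu / 2).
  { intros t Ht. eapply Rle_trans.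
    - apply (smooth_on_increment_abs_le phi k 0 L Kb p t); auto; try lra.
      intros s Hs. apply HDn; auto; lia.
    - assert (Kb * (t - p) <= Kb * (L / INR N)) by (apply Rmult_le_compat_l; lra). lra. }
  destruct (Rle_lt_dec 0 (Derive_n phi k p)) as [Hs|Hs]; [left|right]; intros t Ht;
    specialize (Lip t Ht); apply Rabs_le_between in Lip.
  - rewrite Rabs_pos_eq in Hkv by auto. lra.
  - rewrite Rabs_left in Hkv by auto. lra.
Qed.

Lemma curve_smooth_ball_of_analytic g t : curve_analytic_at g t ->
  exists r, 0 < r /\ curve_smooth_ball g t r.
Proof.
  intros [Hx [Hy Hz]].
  destruct (analytic_at_smooth_ball _ _ Hx) as [r1 [H1 S1]],
           (analytic_at_smooth_ball _ _ Hy) as [r2 [H2 S2]],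
           (analytic_at_smooth_ball _ _ Hz) as [r3 [H3 S3]].
  exists (Rmin r1 (Rmin r2 r3)). split; [repeat apply Rmin_pos; auto|].
  pose proof (Rmin_l r1 (Rmin r2 r3)). pose proof (Rmin_r r1 (Rmin r2 r3)).
  pose proof (Rmin_l r2 r3). pose proof (Rmin_r r2 r3).
  repeat split; eapply smooth_ball_smaller; eauto; lra.
Qed.

Lemma curve_smooth_ball_shift_center g c r y : curve_smooth_ball g c r -> Rabs (y - c) < r ->
  curve_smooth_ball g y (r - Rabs (y - c)).
Proof. intros [H1 [H2 H3]] Hy. repeat split; apply smooth_ball_shift_center; auto. Qed.

Lemma curve_smooth_nbhd g L : 0 < L -> (forall t, 0 <= t <= L -> curve_analytic_at g t) ->
  exists a b, a < 0 /\ L < b /\ forall t, a <= t <= b -> exists r, 0 < r /\ curve_smooth_ball g t r.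
Proof.
  intros HL HA.
  destruct (curve_smooth_ball_of_analytic g 0 (HA 0 ltac:(lra))) as [r0 [Hr0 S0]].
  destruct (curve_smooth_ball_of_analytic g L (HA L ltac:(lra))) as [rL [HrL SL]].
  exists (- r0 / 2), (L + rL / 2). split; [lra|split; [lra|]].
  intros t Ht. destruct (Rlt_le_dec t 0) as [Ht0|Ht0]; [|destruct (Rle_lt_dec t L) as [HtL|HtL]].
  - exists (r0 - Rabs (t - 0)). rewrite Rminus_0_r, Rabs_left by lra. split; [lra|].
    replace (r0 - - t) with (r0 - Rabs (t - 0)) by (rewrite Rminus_0_r, Rabs_left by lra; ring).
    apply curve_smooth_ball_shift_center; auto. rewrite Rminus_0_r, Rabs_left by lra. lra.
  - apply curve_smooth_ball_of_analytic, HA; lra.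
  - exists (rL - Rabs (t - L)). rewrite Rabs_pos_eq by lra. split; [lra|].
    replace (rL - (t - L)) with (rL - Rabs (t - L)) by (rewrite Rabs_pos_eq by lra; ring).
    apply curve_smooth_ball_shift_center; auto. rewrite Rabs_pos_eq by lra. lra.
Qed.

Lemma phase_lin3 g xi y : phase g xi y = vx xi * Derive_n (curve_x g) 0 y +
  vy xi * Derive_n (curve_y g) 0 y + vz xi * Derive_n (curve_z g) 0 y.
Proof. reflexivity. Qed.

Lemma phase_smooth_ball g xi t r : curve_smooth_ball g t r -> smooth_ball (phase g xi) t r.
Proof.
  intros [H1 [H2 H3]]. eapply smooth_ball_ext; [|intros y; symmetry; apply phase_lin3].
  smooth_ball_tac.
Qed.

Lemma Derive_n_phase g xi t r k : 0 < r -> curve_smooth_ball g t r ->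
  Derive_n (phase g xi) k t = dot3 xi (Dn3 g k t).
Proof.
  intros Hr [H1 [H2 H3]]. rewrite (Derive_n_ext _ _ k t (phase_lin3 g xi)).
  rewrite (Derive_n_lin3 _ _ _ _ _ _ 0 k t r) by auto. rewrite Nat.add_0_r. reflexivity.
Qed.

Lemma continuous_bounded_on (f : R -> R) L : 0 <= L -> (forall t, 0 <= t <= L -> continuous f t) ->
  exists B, 0 <= B /\ forall t, 0 <= t <= L -> Rabs (f t) <= B.
Proof.
  intros HL Hc. destruct (continuity_ab_maj (fun t => Rabs (f t)) 0 L HL) as [Mx [HM _]].
  - intros; apply continuity_pt_of_continuous, continuous_Rabs_comp; auto.
  - exists (Rabs (f Mx)). split; auto. apply Rabs_pos.
Qed.

Section CurveOnInterval.

Variables (g : R -> v3) (L : R).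
Hypotheses (HL : 0 < L)
  (Hg : forall t, 0 <= t <= L -> exists r, 0 < r /\ curve_smooth_ball g t r).

Lemma curve_derivative_bounded k :
  exists B, 0 <= B /\ forall t, 0 <= t <= L -> vec_bounded (Dn3 g k t) B.
Proof.
  assert (C : forall f, (forall t r, curve_smooth_ball g t r -> smooth_ball f t r) ->
            exists B, 0 <= B /\ forall t, 0 <= t <= L -> Rabs (Derive_n f k t) <= B).
  { intros f Hf. apply continuous_bounded_on; [lra|]. intros t Ht.
    destruct (Hg t Ht) as [r [Hr Sr]].
    apply ex_derive_continuous_R, (smooth_ball_ex_derive t r); auto. }
  destruct (C (curve_x g)) as [B1 [P1 H1]]; [intros t r [S _]; auto|].
  destruct (C (curve_y g)) as [B2 [P2 H2]]; [intros t r [_ [S _]]; auto|].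
  destruct (C (curve_z g)) as [B3 [P3 H3]]; [intros t r [_ [_ S]]; auto|].
  exists (Rmax B1 (Rmax B2 B3)). split; [eapply Rle_trans; [apply P1|apply Rmax_l]|].
  intros t Ht. pose proof (Rmax_l B1 (Rmax B2 B3)). pose proof (Rmax_r B1 (Rmax B2 B3)).
  pose proof (Rmax_l B2 B3). pose proof (Rmax_r B2 B3).
  specialize (H1 t Ht). specialize (H2 t Ht). specialize (H3 t Ht).
  unfold vec_bounded, Dn3; cbn [vx vy vz mkv3 fst snd]. repeat split; lra.
Qed.

Lemma curve_derivatives_bounded n :
  exists B, 0 <= B /\ forall k t, (k <= n)%nat -> 0 <= t <= L -> vec_bounded (Dn3 g k t) B.
Proof.
  induction n as [|n [B [HB H]]].
  - destruct (curve_derivative_bounded 0) as [B [HB H]]. exists B. split; auto.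
    intros k t Hk Ht. replace k with 0%nat by lia. auto.
  - destruct (curve_derivative_bounded (S n)) as [B' [HB' H']].
    exists (Rmax B B'). split; [eapply Rle_trans; [apply HB|apply Rmax_l]|].
    intros k t Hk Ht. pose proof (Rmax_l B B'). pose proof (Rmax_r B B').
    assert (V : vec_bounded (Dn3 g k t) B \/ vec_bounded (Dn3 g k t) B').
    { destruct (Nat.eq_dec k (S n)) as [->|]; [right; auto|left; apply H; auto; lia]. }
    unfold vec_bounded in *. destruct V as [[? [? ?]]|[? [? ?]]]; repeat split; lra.
Qed.

Lemma det_sum_min m : (forall t, 0 <= t <= L -> 0 < det_sum g m t) ->
  exists c0, 0 < c0 /\ forall t, 0 <= t <= L -> c0 <= det_sum g m t.
Proof.
  intros Hpos. destruct (continuity_ab_min (det_sum g m) 0 L ltac:(lra)) as [tm [Hmin Htm]].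
  - intros c Hc. destruct (Hg c Hc) as [r [Hr Sr]].
    apply continuity_pt_of_continuous, ex_derive_continuous_R.
    apply (smooth_ball_ex_derive c r (det_sum g m) 0 Hr (smooth_ball_det_sum g m c r Sr)).
  - exists (det_sum g m tm). split; auto.
Qed.

End CurveOnInterval.

Lemma curvature_pos g t : curvature g t <> 0 -> 0 < dot3 (Dn3 g 2 t) (Dn3 g 2 t).
Proof.
  intros H. change (sqrt (dot3 (Dn3 g 2 t) (Dn3 g 2 t)) <> 0) in H.
  destruct (dot3_self_nonneg (Dn3 g 2 t)) as [H0|H0]; auto.
  rewrite <- H0, sqrt_0 in H. lra.
Qed.

Lemma is_derive_const_on_interval (f : R -> R) a b t l : a < b -> a <= t <= b ->
  (forall s, a <= s <= b -> f s = f t) -> is_derive f t l -> l = 0.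
Proof.
  intros Hab Ht Hc Hd. apply is_derive_Reals in Hd.
  destruct (Req_dec l 0) as [|Hl]; auto. exfalso.
  pose proof (Rabs_pos_lt l Hl).
  destruct (Hd (Rabs l / 2) ltac:(lra)) as [dl Hdl]. pose proof (cond_pos dl) as Hdp.
  assert (Hh : exists h, h <> 0 /\ Rabs h < dl /\ a <= t + h <= b).
  { destruct (Rlt_le_dec t b) as [Htb|Htb].
    - exists (Rmin (dl / 2) (b - t)).
      assert (0 < Rmin (dl / 2) (b - t)) by (apply Rmin_pos; lra).
      pose proof (Rmin_l (dl / 2) (b - t)). pose proof (Rmin_r (dl / 2) (b - t)).
      rewrite Rabs_pos_eq; lra.
    - exists (- Rmin (dl / 2) (b - a)).
      assert (0 < Rmin (dl / 2) (b - a)) by (apply Rmin_pos; lra).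
      pose proof (Rmin_l (dl / 2) (b - a)). pose proof (Rmin_r (dl / 2) (b - a)).
      rewrite Rabs_Ropp, Rabs_pos_eq; lra. }
  destruct Hh as [h [Hh0 [Hhd Hhab]]]. specialize (Hdl h Hh0 Hhd).
  rewrite (Hc (t + h)), Rminus_diag, Rdiv_0_l, Rminus_0_l, Rabs_Ropp in Hdl by auto. lra.
Qed.

Lemma tangent_orthogonal_acceleration g L t0 r : 0 < L -> 0 <= t0 <= L -> 0 < r ->
  curve_smooth_ball g t0 r -> (forall t, 0 <= t <= L -> dot3 (Dn3 g 1 t) (Dn3 g 1 t) = 1) ->
  dot3 (Dn3 g 1 t0) (Dn3 g 2 t0) = 0.
Proof.
  intros HL Ht0 Hr [S1 [S2 S3]] Hu.
  assert (Hd : is_derive (fun y => dot3 (Dn3 g 1 y) (Dn3 g 1 y)) t0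
                 (2 * dot3 (Dn3 g 1 t0) (Dn3 g 2 t0))).
  { pose proof (smooth_ball_ex_derive _ _ _ 1 Hr S1). pose proof (smooth_ball_ex_derive _ _ _ 1 Hr S2).
    pose proof (smooth_ball_ex_derive _ _ _ 1 Hr S3).
    v3_simpl. auto_derive; [repeat split; auto|].
    change (fun x => Derive_n (curve_x g) 1 x) with (Derive_n (curve_x g) 1).
    change (fun x => Derive_n (curve_y g) 1 x) with (Derive_n (curve_y g) 1).
    change (fun x => Derive_n (curve_z g) 1 x) with (Derive_n (curve_z g) 1).
    simpl. ring. }
  assert (Hconst : forall s, 0 <= s <= L ->
            dot3 (Dn3 g 1 s) (Dn3 g 1 s) = dot3 (Dn3 g 1 t0) (Dn3 g 1 t0))
    by (intros s Hs; rewrite (Hu s Hs), (Hu t0 Ht0); reflexivity).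
  pose proof (is_derive_const_on_interval _ 0 L t0 _ HL Ht0 Hconst Hd). lra.
Qed.

(* At [t0] the torsion vanishes to order [m] unless some [det (g', g'', g^(k))],
   [3 <= k <= m + 3], is nonzero; elsewhere [det (g', g'', g''') <> 0]. *)
Lemma det_sum_pos g L t0 m t r : 0 < L -> 0 <= t <= L -> 0 < r -> curve_smooth_ball g t r ->
  (forall s, 0 <= s <= L -> dot3 (Dn3 g 1 s) (Dn3 g 1 s) = 1) ->
  (forall s, 0 <= s <= L -> curvature g s <> 0) ->
  (forall s, 0 <= s <= L -> torsion g s = 0 -> s = t0) -> Derive_n (torsion g) m t0 <> 0 ->
  0 < det_sum g (S m) t.
Proof.
  intros HL Ht Hr HS Hu Hc Ht0 Htau.
  assert (Hq : 0 < dot3 (Dn3 g 2 t) (Dn3 g 2 t)) by (apply curvature_pos, Hc; auto).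
  destruct (det_sum_nonneg g (S m) t) as [Hn|Hn]; auto. exfalso.
  assert (Hdet : forall k, (3 <= k <= m + 3)%nat -> det3 (Dn3 g 1 t) (Dn3 g 2 t) (Dn3 g k t) = 0).
  { intros k Hk. replace k with (3 + (k - 3))%nat by lia.
    pose proof (det_sum_ge g (S m) t (k - 3) ltac:(lia)).
    apply Rsqr_0_uniq. rewrite Rsqr_pow2. pose proof (pow2_ge_0 (det3 (Dn3 g 1 t) (Dn3 g 2 t) (Dn3 g (3 + (k - 3)) t))). lra. }
  destruct (Req_dec t t0) as [<-|Hne].
  - assert (Horth := tangent_orthogonal_acceleration g L t r HL Ht Hr HS Hu).
    assert (Hn0 : 0 < dot3 (cross3 (Dn3 g 1 t) (Dn3 g 2 t)) (cross3 (Dn3 g 1 t) (Dn3 g 2 t))).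
    { replace (dot3 (cross3 (Dn3 g 1 t) (Dn3 g 2 t)) (cross3 (Dn3 g 1 t) (Dn3 g 2 t))) with
        (dot3 (Dn3 g 1 t) (Dn3 g 1 t) * dot3 (Dn3 g 2 t) (Dn3 g 2 t) - dot3 (Dn3 g 1 t) (Dn3 g 2 t) ^ 2)
        by (v3_simpl; ring).
      rewrite Hu, Horth by auto. lra. }
    apply Htau, (torsion_jet_vanishes g t r m Hr HS Hq); [|lia].
    apply (det3_jet_vanishes g t r m Hr HS); auto.
  - assert (Htn : torsion g t <> 0) by (intros H; apply Hne, Ht0; auto).
    destruct HS as [S1 [S2 S3]].
    rewrite torsion_formula in Htn;
      [|intros k Hk; repeat split; apply (smooth_ball_ex_derive _ r); auto|auto].
    rewrite (Hdet 3%nat) in Htn by lia.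
    apply Htn. unfold Rdiv. ring.
Qed.

Lemma partition_fine c L e : 0 < e -> exists N, (1 <= N)%nat /\ c * (L / INR N) < e.
Proof.
  intros He. destruct (INR_unbounded (Rabs c * Rabs L / e)) as [n Hn].
  exists (S n). split; [lia|].
  assert (HSn : 0 < INR (S n)) by (apply lt_0_INR; lia).
  apply Rle_lt_trans with (Rabs c * Rabs L / INR (S n)).
  { unfold Rdiv. rewrite <- Rmult_assoc, <- Rabs_mult. eapply Rle_trans; [apply RRle_abs|].
    rewrite Rabs_mult, (Rabs_pos_eq (/ _)) by (left; apply Rinv_0_lt_compat; auto). lra. }
  apply (Rmult_lt_reg_r (INR (S n))); auto. unfold Rdiv. rewrite Rmult_assoc, Rinv_l by lra.
  rewrite S_INR. apply (Rmult_lt_reg_r (/ e)); [apply Rinv_0_lt_compat; auto|].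
  replace (e * (INR n + 1) * / e) with (INR n + 1) by (field; lra). unfold Rdiv in Hn. lra.
Qed.

Lemma phase_uniform_cover L g t0 m : 0 < L ->
  (forall t, 0 <= t <= L -> curve_analytic_at g t) ->
  (forall t, 0 <= t <= L -> norm3 (D3 g t) = 1) ->
  (forall t, 0 <= t <= L -> curvature g t <> 0) ->
  (forall t, 0 <= t <= L -> torsion g t = 0 -> t = t0) ->
  Derive_n (torsion g) m t0 <> 0 ->
  exists a b mu B2 N, a < 0 /\ L < b /\ 0 < mu /\ 0 <= B2 /\ (1 <= N)%nat /\
    forall xi, norm3 xi = 1 -> smooth_on (phase g xi) a b /\
      (forall t, 0 <= t <= L -> Rabs (Derive_n (phase g xi) 2 t) <= B2) /\
      derivative_cover (phase g xi) L (m + 3) mu N.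
Proof.
  intros HL HA Hal Hcu Htz Htau.
  destruct (curve_smooth_nbhd g L HL HA) as [a [b [Ha [Hb HSe]]]].
  assert (HS : forall t, 0 <= t <= L -> exists r, 0 < r /\ curve_smooth_ball g t r)
    by (intros; apply HSe; lra).
  assert (Hu : forall s, 0 <= s <= L -> dot3 (Dn3 g 1 s) (Dn3 g 1 s) = 1)
    by (intros; apply dot3_self_of_norm3, Hal; auto).
  destruct (curve_derivatives_bounded g L HL HS (m + 4)) as [B [HB HBd]].
  destruct (det_sum_min g L HL HS (S m)) as [c0 [Hc0 Hmin]].
  { intros t Ht. destruct (HS t Ht) as [r [Hr Sr]]. exact (det_sum_pos g L t0 m t r HL Ht Hr Sr Hu Hcu Htz Htau). }
  destruct (phase_derivative_lower_bound g L m B c0 Hc0 HB) as [nu [Hnu Low]]; auto.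
  { intros k t Hk Ht. apply HBd; auto; lia. }
  set (Kb := 3 * B + 1).
  destruct (partition_fine Kb L (nu / 2)) as [N [HN HNd]]; [lra|].
  exists a, b, (nu / 2), Kb, N. do 4 (split; [unfold Kb; lra|]). split; [lia|].
  intros xi Hxi1. pose proof (dot3_self_of_norm3 xi Hxi1) as Hxi.
  assert (HR : smooth_on (phase g xi) a b).
  { intros n t Ht. destruct (HSe t Ht) as [r [Hr Sr]].
    apply (smooth_ball_ex_derive t r); auto. apply phase_smooth_ball; auto. }
  assert (HDn : forall k t, (k <= m + 4)%nat -> 0 <= t <= L ->
            Rabs (Derive_n (phase g xi) k t) <= Kb).
  { intros k t Hk Ht. destruct (HS t Ht) as [r [Hr Sr]]. rewrite (Derive_n_phase g xi t r k) by auto.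
    eapply Rle_trans; [apply Rabs_dot3_le; auto|]. unfold Kb; lra. }
  split; [auto|split; [intros t Ht; apply HDn; auto; lia|]].
  apply (derivative_cover_of_lower_bound _ L _ nu Kb); auto; try (unfold Kb; lra).
  - eapply smooth_on_subinterval; eauto; lra.
  - intros k t Hk Ht. apply HDn; auto; lia.
  - intros t Ht. destruct (Low xi t Hxi Ht) as [k [Hk Hkv]]. destruct (HS t Ht) as [r [Hr Sr]].
    exists k. rewrite (Derive_n_phase g xi t r k) by auto. auto.
Qed.

Lemma amplitude_cover_bound phi L a b K mu B2 N lam A : 0 < L -> a < 0 -> L < b ->
  smooth_on phi a b -> (1 <= K)%nat -> 0 < mu -> 0 <= B2 -> (1 <= N)%nat ->
  (forall t, 0 <= t <= L -> Rabs (Derive_n phi 2 t) <= B2) ->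
  derivative_cover phi L K mu N -> 0 < lam -> smooth A ->
  Rabs (RInt (fun t => A t * cos (lam * phi t)) 0 L) <=
    (L + INR N * piece_constant mu B2 L K) * Rpower lam (- / INR K) *
    (sup_norm A 0 L + L1_norm_deriv A 0 L).
Proof.
  intros. apply (amplitude_bound phi lam L a b); auto.
  intros x Hx. apply (cos_integral_cover_bound phi L K mu B2 N lam x); auto.
  eapply smooth_on_subinterval; eauto; lra.
Qed.

Lemma derivative_cover_plus_const phi L K mu N c :
  derivative_cover phi L K mu N -> derivative_cover (fun x => phi x + c) L K mu N.
Proof.
  intros H i Hi. destruct (H i Hi) as [[|k] [Hk Hsign]]; [lia|].
  exists (S k). split; auto.
  destruct Hsign as [Hs|Hs]; [left|right]; intros t Ht; rewrite Derive_n_plus_const; auto.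
Qed.

Lemma sin_as_shifted_cos lam x : 0 < lam -> sin (lam * x) = cos (lam * (x + - (PI / 2) / lam)).
Proof.
  intros Hlam. replace (lam * (x + - (PI / 2) / lam)) with (- (PI / 2 - lam * x)) by (field; lra).
  rewrite cos_neg, cos_shift. reflexivity.
Qed.

Lemma sqrt_sum_sq_le a b : sqrt (a ^ 2 + b ^ 2) <= Rabs a + Rabs b.
Proof.
  pose proof (Rabs_pos a). pose proof (Rabs_pos b).
  rewrite <- (sqrt_pow2 (Rabs a + Rabs b)) by lra. apply sqrt_le_1_alt.
  rewrite <- (pow2_abs a), <- (pow2_abs b). simpl. nra.
Qed.

Theorem proposition3p4 (L : R) (gamma : R -> v3) (t0 : R) (m : nat) :
  0 < L ->
  (* real analytic curve (on a neighbourhood of [0,L]) *)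
  (forall t, 0 <= t <= L -> curve_analytic_at gamma t) ->
  (* arc-length parametrisation *)
  (forall t, 0 <= t <= L -> norm3 (D3 gamma t) = 1) ->
  (* nowhere zero curvature *)
  (forall t, 0 <= t <= L -> curvature gamma t <> 0) ->
  non_planar gamma L ->
  (* t0 is the only zero of the torsion in [0,L] *)
  0 <= t0 <= L ->
  (forall t, 0 <= t <= L -> torsion gamma t = 0 -> t = t0) ->
  (* of order m >= 1 *)
  (1 <= m)%nat ->
  (forall k, (k < m)%nat -> Derive_n (torsion gamma) k t0 = 0) ->
  Derive_n (torsion gamma) m t0 <> 0 ->
  exists C : R, 0 < C /\
    forall (xi : v3) (lam : R) (A : R -> R),
      norm3 xi = 1 -> 0 < lam -> smooth A ->
      osc_integral_abs gamma L A lam xi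
        <= C * Rpower lam (- / INR (m + 3))
             * (sup_norm A 0 L + L1_norm_deriv A 0 L).
Proof.
  (* Only the uniqueness of the zero of [tau] and [tau^(m)(t0) <> 0] are needed:
     non-planarity, [t0 \in [0, L]], [m >= 1] and [tau^(k)(t0) = 0] for [k < m] are not. *)
  intros HL HA Hal Hcu _ _ Htz _ _ Htau.
  destruct (phase_uniform_cover L gamma t0 m HL HA Hal Hcu Htz Htau)
    as [a [b [mu [B2 [N [Ha [Hb [Hmu [HB2 [HN Hcover]]]]]]]]]].
  set (Mc := L + INR N * piece_constant mu B2 L (m + 3)).
  assert (HMc : 0 < Mc)
    by (pose proof (piece_constant_pos mu B2 L (m + 3) Hmu HB2 ltac:(lra)); pose proof (pos_INR N);
        unfold Mc; nra).
  exists (2 * Mc). split; [lra|]. intros xi lam A Hxi Hlam HAs.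
  destruct (Hcover xi Hxi) as [HR [HB Hcov]].
  assert (Hre := amplitude_cover_bound (phase gamma xi) L a b (m + 3) mu B2 N lam A
                   HL Ha Hb HR ltac:(lia) Hmu HB2 HN HB Hcov Hlam HAs).
  assert (Him := amplitude_cover_bound (fun t => phase gamma xi t + - (PI / 2) / lam)
                   L a b (m + 3) mu B2 N lam A HL Ha Hb (smooth_on_plus_const _ _ _ _ HR) ltac:(lia)
                   Hmu HB2 HN ltac:(intros t Ht; rewrite (Derive_n_plus_const _ _ 1); auto)
                   (derivative_cover_plus_const _ _ _ _ _ _ Hcov) Hlam HAs).
  rewrite <- (RInt_ext (fun t => A t * sin (lam * phase gamma xi t)))
    in Him by (intros; rewrite sin_as_shifted_cos; auto).
  unfold osc_integral_abs. eapply Rle_trans; [apply sqrt_sum_sq_le|]. fold Mc in Hre, Him. lra.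
Qed.
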